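(* Let $(V,m)$ be a discrete measure space, $(b,c)$ a graph over $(V,m)$, and let $Q$ with domain $D$ satisfy condition (C) with respect to $(b,c)$ (so $D\subseteq\widetilde F$). Then for $u\in D$ the following are equivalent: (i) $(\widetilde L+1)u=0$; (ii) $u$ is orthogonal to $D(Q^{(D)})$ with respect to $\langle\cdot,\cdot\rangle_Q$. Consequently, the Hilbert space $(D,\langle\cdot,\cdot\rangle_Q)$ is the orthogonal sum $D=D(Q^{(D)})\oplus\mathcal H^{(Q)}$, where $\mathcal H^{(Q)}=\{u\in D:(\widetilde L+1)u=0\}$.
   Context: $V$ is a finite or countably infinite set and $m:V\to(0,\infty)$; $(V,m)$ is a discrete measure space. $C(V)$ is the set of all functions $V\to\mathbb C$, $C_c(V)$ the finitely supported ones, and $\ell^2(V,m)$ carries $\langle u,v\rangle=\sum_x u(x)\overline{v(x)}m(x)$. A graph over $(V,m)$ is a pair $(b,c)$ with $c:V\to[0,\infty)$, $b:V\times V\to[0,\infty)$, $b(x,x)=0$, $b(x,y)=b(y,x)$, $\sum_y b(x,y)<\infty$. Let $\widetilde F=\{u\in C(V):\sum_y|b(x,y)u(y)|<\infty\ \forall x\}$ and $\widetilde L u(x)=\frac{1}{m(x)}\sum_y b(x,y)(u(x)-u(y))+\frac{c(x)}{m(x)}u(x)$ for $u\in\widetilde F$. $Q^{(N)}$ is the form on $\ell^2(V,m)$ with domain $D(Q^{(N)})=\{u\in\ell^2(V,m):\frac12\sum_{x,y}b(x,y)|u(x)-u(y)|^2+\sum_x c(x)|u(x)|^2<\infty\}$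 and $Q^{(N)}(u,v)=\frac12\sum_{x,y}b(x,y)(u(x)-u(y))\overline{(v(x)-v(y))}+\sum_x c(x)u(x)\overline{v(x)}$; it is non-negative, symmetric and closed. $Q^{(D)}$ is the closure of the restriction of $Q^{(N)}$ to $C_c(V)$. For a closed non-negative form $Q$, $\langle u,v\rangle_Q=Q(u,v)+\langle u,v\rangle$ on $D(Q)$. A symmetric form $Q$ on $\ell^2(V,m)$ with domain $D$ satisfies condition (C) w.r.t. $(b,c)$ if: (C0) $Q$ is non-negative and closed; (C1) $C_c(V)\subseteq D$; (C2) for all $u\in D$ and $v\in C_c(V)$ the sum $\sum_x u(x)\overline{\widetilde L v(x)}m(x)$ converges absolutely and equals $Q(u,v)$. *)

From Stdlib Require Import Reals Lra List Classical ClassicalEpsilon.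
Open Scope R_scope.

Definition Cx : Type := (R * R)%type.
Definition RC (r : R) : Cx := (r, 0).
Definition C0 : Cx := (0, 0).
Definition Cplus (z w : Cx) : Cx := (fst z + fst w, snd z + snd w).
Definition Copp (z : Cx) : Cx := (- fst z, - snd z).
Definition Cminus (z w : Cx) : Cx := Cplus z (Copp w).
Definition Cmult (z w : Cx) : Cx :=
  (fst z * fst w - snd z * snd w, fst z * snd w + snd z * fst w).
Definition Cconj (z : Cx) : Cx := (fst z, - snd z).
Definition Re (z : Cx) : R := fst z.
Definition Cabs (z : Cx) : R := sqrt (fst z * fst z + snd z * snd z).

Fixpoint Csum_list {V : Type} (f : V -> Cx) (l : list V) : Cx :=
  match l with nil => C0 | x :: l' => Cplus (f x) (Csum_list f l') end.
Fixpoint Rsum_list {V : Type} (f : V -> R) (l : list V) : R :=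
  match l with nil => 0 | x :: l' => f x + Rsum_list f l' end.

Definition Csummable {V : Type} (f : V -> Cx) : Prop :=
  exists M : R, forall l : list V, NoDup l -> Rsum_list (fun x => Cabs (f x)) l <= M.

Definition HasSumC {V : Type} (f : V -> Cx) (s : Cx) : Prop :=
  Csummable f /\
  forall eps : R, 0 < eps -> exists l0 : list V, forall l : list V,
    NoDup l -> incl l0 l -> Cabs (Cminus (Csum_list f l) s) < eps.

(* the value of the sum (0 if the sum does not exist) *)
Definition sumC {V : Type} (f : V -> Cx) : Cx :=
  match excluded_middle_informative (exists s, HasSumC f s) with
  | left H => proj1_sig (constructive_indefinite_description _ H)
  | right _ => C0
  end.

Definition countable (V : Type) : Prop :=
  exists enc : V -> nat, forall x y, enc x = enc y -> x = y.

Definition is_measure {V : Type} (m : V -> R) : Prop := forall x, 0 < m x.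

Definition is_graph {V : Type} (b : V -> V -> R) (c : V -> R) : Prop :=
  (forall x, 0 <= c x) /\
  (forall x y, 0 <= b x y) /\
  (forall x, b x x = 0) /\
  (forall x y, b x y = b y x) /\
  (forall x, Csummable (fun y => RC (b x y))).

Definition Cc {V : Type} (v : V -> Cx) : Prop :=
  exists l : list V, forall x, ~ In x l -> v x = C0.

Definition l2 {V : Type} (m : V -> R) (u : V -> Cx) : Prop :=
  Csummable (fun x => RC (Cabs (u x) * Cabs (u x) * m x)).

Definition ip {V : Type} (m : V -> R) (u v : V -> Cx) : Cx :=
  sumC (fun x => Cmult (Cmult (u x) (Cconj (v x))) (RC (m x))).

Definition Ftilde {V : Type} (b : V -> V -> R) (u : V -> Cx) : Prop :=
  forall x, Csummable (fun y => Cmult (RC (b x y)) (u y)).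

Definition Ltilde {V : Type} (m : V -> R) (b : V -> V -> R) (c : V -> R)
  (u : V -> Cx) (x : V) : Cx :=
  Cmult (RC (/ m x))
    (Cplus (sumC (fun y => Cmult (RC (b x y)) (Cminus (u x) (u y))))
           (Cmult (RC (c x)) (u x))).

Definition DQN {V : Type} (m : V -> R) (b : V -> V -> R) (c : V -> R)
  (u : V -> Cx) : Prop :=
  l2 m u /\
  Csummable (fun p : V * V =>
     RC (b (fst p) (snd p) * Cabs (Cminus (u (fst p)) (u (snd p)))
                           * Cabs (Cminus (u (fst p)) (u (snd p))))) /\
  Csummable (fun x => RC (c x * Cabs (u x) * Cabs (u x))).

Definition QN {V : Type} (b : V -> V -> R) (c : V -> R) (u v : V -> Cx) : Cx :=
  Cplus
    (Cmult (RC (1/2)) (sumC (fun p : V * V =>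
       Cmult (RC (b (fst p) (snd p)))
             (Cmult (Cminus (u (fst p)) (u (snd p)))
                    (Cconj (Cminus (v (fst p)) (v (snd p))))))))
    (sumC (fun x => Cmult (RC (c x)) (Cmult (u x) (Cconj (v x))))).

Definition formnorm {V : Type} (m : V -> R) (Q : (V -> Cx) -> (V -> Cx) -> Cx)
  (w : V -> Cx) : R := sqrt (Re (Q w w) + Re (ip m w w)).

Definition fminus {V : Type} (u v : V -> Cx) : V -> Cx := fun x => Cminus (u x) (v x).
Definition fplus {V : Type} (u v : V -> Cx) : V -> Cx := fun x => Cplus (u x) (v x).
Definition fscal {V : Type} (a : Cx) (u : V -> Cx) : V -> Cx := fun x => Cmult a (u x).

(* Dirichlet form Q^(D): closure of Q^(N) restricted to C_c(V); its domain is
   the closure of C_c(V) in D(Q^(N)) w.r.t. the Q^(N)-form norm. *)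
Definition DQD {V : Type} (m : V -> R) (b : V -> V -> R) (c : V -> R)
  (u : V -> Cx) : Prop :=
  DQN m b c u /\
  forall eps, 0 < eps -> exists phi, Cc phi /\
    formnorm m (QN b c) (fminus u phi) < eps.

Definition sym_form {V : Type} (m : V -> R) (D : (V -> Cx) -> Prop)
  (Q : (V -> Cx) -> (V -> Cx) -> Cx) : Prop :=
  (forall u, D u -> l2 m u) /\
  D (fun _ => C0) /\
  (forall u v, D u -> D v -> D (fplus u v)) /\
  (forall a u, D u -> D (fscal a u)) /\
  (forall u v w, D u -> D v -> D w -> Q (fplus u v) w = Cplus (Q u w) (Q v w)) /\
  (forall a u v, D u -> D v -> Q (fscal a u) v = Cmult a (Q u v)) /\
  (forall u v, D u -> D v -> Q v u = Cconj (Q u v)).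

Definition nonneg_form {V : Type} (D : (V -> Cx) -> Prop)
  (Q : (V -> Cx) -> (V -> Cx) -> Cx) : Prop :=
  forall u, D u -> 0 <= Re (Q u u).

Definition closed_form {V : Type} (m : V -> R) (D : (V -> Cx) -> Prop)
  (Q : (V -> Cx) -> (V -> Cx) -> Cx) : Prop :=
  forall un : nat -> V -> Cx,
    (forall n, D (un n)) ->
    (forall eps, 0 < eps -> exists N, forall n k, (N <= n)%nat -> (N <= k)%nat ->
        formnorm m Q (fminus (un n) (un k)) < eps) ->
    exists u, D u /\
      forall eps, 0 < eps -> exists N, forall n, (N <= n)%nat ->
        formnorm m Q (fminus (un n) u) < eps.

Definition condC {V : Type} (m : V -> R) (b : V -> V -> R) (c : V -> R)
  (D : (V -> Cx) -> Prop) (Q : (V -> Cx) -> (V -> Cx) -> Cx) : Prop :=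
  (nonneg_form D Q /\ closed_form m D Q) /\
  (forall v, Cc v -> D v) /\
  (forall u v, D u -> Cc v ->
     HasSumC (fun x => Cmult (Cmult (u x) (Cconj (Ltilde m b c v x))) (RC (m x)))
             (Q u v)).

Definition ipQ {V : Type} (m : V -> R) (Q : (V -> Cx) -> (V -> Cx) -> Cx)
  (u v : V -> Cx) : Cx := Cplus (Q u v) (ip m u v).

Definition HQ {V : Type} (m : V -> R) (b : V -> V -> R) (c : V -> R)
  (D : (V -> Cx) -> Prop) (u : V -> Cx) : Prop :=
  D u /\ forall x, Cplus (Ltilde m b c u x) (u x) = C0.

(* Testing condition (C2) against the unit functions [delta x] gives
   <u, delta x>_Q = m(x) ((L~ + 1) u)(x), so (L~ + 1) u = 0 iff u is <.,.>_Q-orthogonal to C_c(V).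
   On C_c(V), (C2) and a summation by parts (Green's formula) show that Q and Q^(N) have the
   same form norm.  Since point evaluations are continuous for both norms, the Q^(N)-closure
   D(Q^(D)) of C_c(V) is contained in D and coincides with the Q-closure of C_c(V) there (Fatou's
   lemma handles limits taken in D).  Orthogonality to C_c(V) therefore extends to D(Q^(D)).
   For the decomposition, a sequence in C_c(V) minimising the distance to u is Cauchy by the
   parallelogram law; its limit u0 lies in D(Q^(D)), and u - u0, which minimises the distance
   to C_c(V), is orthogonal to every [delta x] by the variational inequality. *)

From Stdlib Require Import Reals List.
From Stdlib Require Import Lra Classical ClassicalEpsilon FunctionalExtensionality Permutation FinFun.
Open Scope R_scope.

(** * Unordered sums of real families *)

Definition RSummable {W : Type} (g : W -> R) : Prop :=
  exists M, forall l, NoDup l -> Rsum_list (fun x => Rabs (g x)) l <= M.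

Definition HasSumR {W : Type} (g : W -> R) (s : R) : Prop :=
  RSummable g /\ forall eps, 0 < eps -> exists l0, forall l, NoDup l -> incl l0 l ->
     Rabs (Rsum_list g l - s) < eps.

Definition classic_eq_dec {W : Type} (x y : W) : {x = y} + {x <> y} :=
  excluded_middle_informative (x = y).

Section RealSums.
Context {W : Type}.

Lemma Rsum_perm (f : W -> R) l1 l2 : Permutation l1 l2 -> Rsum_list f l1 = Rsum_list f l2.
Proof. induction 1; simpl; lra. Qed.

Lemma Rsum_plus (f g : W -> R) l :
  Rsum_list (fun x => f x + g x) l = Rsum_list f l + Rsum_list g l.
Proof. induction l; simpl; lra. Qed.

Lemma Rsum_minus (f g : W -> R) l :
  Rsum_list (fun x => f x - g x) l = Rsum_list f l - Rsum_list g l.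
Proof. induction l; simpl; lra. Qed.

Lemma Rsum_scal (k : R) (f : W -> R) l : Rsum_list (fun x => k * f x) l = k * Rsum_list f l.
Proof. induction l; simpl; [ring | rewrite IHl; ring]. Qed.

Lemma Rsum_ext (f g : W -> R) l : (forall x, f x = g x) -> Rsum_list f l = Rsum_list g l.
Proof. intros H; induction l; simpl; [lra | rewrite IHl, H; lra]. Qed.

Lemma Rsum_le (f g : W -> R) l : (forall x, f x <= g x) -> Rsum_list f l <= Rsum_list g l.
Proof. intros H; induction l; simpl; [lra | specialize (H a); lra]. Qed.

Lemma Rsum_nonneg (f : W -> R) l : (forall x, 0 <= f x) -> 0 <= Rsum_list f l.
Proof. intros H; induction l; simpl; [lra | specialize (H a); lra]. Qed.

Lemma Permutation_remove (a : W) l :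
  In a l -> NoDup l -> Permutation l (a :: remove classic_eq_dec a l).
Proof.
  induction l as [|x l IH]; simpl; intros Hin Hnd; [contradiction|].
  inversion Hnd; subst.
  destruct (classic_eq_dec a x) as [->|ne].
  - rewrite notin_remove by auto. auto.
  - destruct Hin as [->|Hin]; [congruence|].
    eapply perm_trans; [apply perm_skip, IH; auto|]. apply perm_swap.
Qed.

Lemma NoDup_remove_classic (a : W) l : NoDup l -> NoDup (remove classic_eq_dec a l).
Proof.
  induction 1; simpl; [constructor|].
  destruct (classic_eq_dec a x); auto. constructor; auto.
  intro H1. apply in_remove in H1. tauto.
Qed.

Lemma Rsum_incl_support (g : W -> R) l l' : NoDup l -> NoDup l' -> incl l l' ->
  (forall x, In x l' -> ~ In x l -> g x = 0) -> Rsum_list g l' = Rsum_list g l.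
Proof.
  revert l; induction l' as [|a l' IH]; intros l Hl Hl' Hi Hz.
  - destruct l; [reflexivity | exfalso; apply (Hi w); left; auto].
  - inversion Hl'; subst. simpl.
    destruct (in_dec classic_eq_dec a l) as [Ha|Ha].
    + rewrite (Rsum_perm g _ _ (Permutation_remove a l Ha Hl)). simpl.
      rewrite (IH (remove classic_eq_dec a l)); auto.
      * apply NoDup_remove_classic; auto.
      * intros y Hy. apply in_remove in Hy. destruct Hy as [Hy ne].
        destruct (Hi y Hy); [congruence | auto].
      * intros y Hy Hn. apply Hz; [right; auto|]. intro Hy2.
        apply Hn. apply in_in_remove; auto. intro; subst; tauto.
    + rewrite Hz by (simpl; auto). rewrite (IH l); auto; [lra| |].
      * intros y Hy. destruct (Hi y Hy); [subst; tauto | auto].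
      * intros y Hy Hn. apply Hz; [right|]; auto.
Qed.

Lemma Rsum_le_incl (h : W -> R) l1 l2 : (forall x, 0 <= h x) -> NoDup l1 -> incl l1 l2 ->
  Rsum_list h l1 <= Rsum_list h l2.
Proof.
  intros Hh. revert l1; induction l2 as [|a l2 IH]; intros l1 Hl Hi.
  - destruct l1; [simpl; lra | exfalso; apply (Hi w); left; auto].
  - simpl. destruct (in_dec classic_eq_dec a l1) as [Ha|Ha].
    + rewrite (Rsum_perm h _ _ (Permutation_remove a l1 Ha Hl)). simpl.
      assert (Rsum_list h (remove classic_eq_dec a l1) <= Rsum_list h l2); [|lra].
      apply IH. apply NoDup_remove_classic; auto.
      intros y Hy. apply in_remove in Hy. destruct Hy as [Hy ne].
      destruct (Hi y Hy); [congruence | auto].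
    + specialize (Hh a). assert (Rsum_list h l1 <= Rsum_list h l2); [|lra].
      apply IH; auto. intros y Hy. destruct (Hi y Hy); [subst; tauto | auto].
Qed.

Definition list_union (l1 l2 : list W) := nodup classic_eq_dec (l1 ++ l2).

Lemma NoDup_list_union l1 l2 : NoDup (list_union l1 l2).
Proof. apply NoDup_nodup. Qed.

Lemma incl_list_union_l l1 l2 : incl l1 (list_union l1 l2).
Proof. intros x Hx. apply nodup_In. apply in_or_app; auto. Qed.

Lemma incl_list_union_r l1 l2 : incl l2 (list_union l1 l2).
Proof. intros x Hx. apply nodup_In. apply in_or_app; auto. Qed.

Lemma HasSumR_unique (g : W -> R) s t : HasSumR g s -> HasSumR g t -> s = t.
Proof.
  intros [_ Hs] [_ Ht].
  destruct (Req_dec s t) as [|ne]; auto. exfalso.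
  set (e := Rabs (s - t) / 2).
  assert (He : 0 < e) by (unfold e; assert (0 < Rabs (s - t)) by (apply Rabs_pos_lt; lra); lra).
  destruct (Hs e He) as [l1 H1]. destruct (Ht e He) as [l2 H2].
  set (l := list_union l1 l2).
  specialize (H1 l (NoDup_list_union _ _) (incl_list_union_l _ _)).
  specialize (H2 l (NoDup_list_union _ _) (incl_list_union_r _ _)).
  assert (Rabs (s - t) <= Rabs (Rsum_list g l - t) + Rabs (Rsum_list g l - s)).
  { replace (s - t) with ((Rsum_list g l - t) - (Rsum_list g l - s)) by ring.
    eapply Rle_trans; [apply Rabs_triang|]. rewrite Rabs_Ropp. lra. }
  unfold e in *. lra.
Qed.

Lemma RSummable_le (f g : W -> R) :
  (forall x, Rabs (f x) <= Rabs (g x)) -> RSummable g -> RSummable f.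
Proof.
  intros H [M HM]. exists M. intros l Hl. eapply Rle_trans; [|apply (HM l Hl)].
  apply Rsum_le; auto.
Qed.

Lemma RSummable_plus (f g : W -> R) :
  RSummable f -> RSummable g -> RSummable (fun x => f x + g x).
Proof.
  intros [M1 H1] [M2 H2]. exists (M1 + M2). intros l Hl.
  eapply Rle_trans.
  { apply (Rsum_le _ (fun x => Rabs (f x) + Rabs (g x))); intros; apply Rabs_triang. }
  rewrite Rsum_plus. specialize (H1 l Hl); specialize (H2 l Hl); lra.
Qed.

Lemma RSummable_scal (k : R) (f : W -> R) : RSummable f -> RSummable (fun x => k * f x).
Proof.
  intros [M H1]. exists (Rabs k * M). intros l Hl.
  rewrite (Rsum_ext _ (fun x => Rabs k * Rabs (f x))) by (intros; apply Rabs_mult).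
  rewrite Rsum_scal. apply Rmult_le_compat_l; [apply Rabs_pos | auto].
Qed.

Lemma HasSumR_summable (g : W -> R) s : HasSumR g s -> RSummable g.
Proof. intros [H _]; auto. Qed.

Lemma HasSumR_ext (f g : W -> R) a : (forall x, f x = g x) -> HasSumR f a -> HasSumR g a.
Proof. intros H. replace g with f; auto. apply functional_extensionality; auto. Qed.

Lemma HasSumR_plus (f g : W -> R) a b :
  HasSumR f a -> HasSumR g b -> HasSumR (fun x => f x + g x) (a + b).
Proof.
  intros [Sf Hf] [Sg Hg]. split; [apply RSummable_plus; auto|].
  intros eps He. destruct (Hf (eps / 2)) as [l1 H1]; [lra|].
  destruct (Hg (eps / 2)) as [l2 H2]; [lra|].
  exists (l1 ++ l2). intros l Hl Hi.
  rewrite Rsum_plus.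
  assert (A := H1 l Hl (fun x h => Hi x (in_or_app _ _ _ (or_introl h)))).
  assert (B := H2 l Hl (fun x h => Hi x (in_or_app _ _ _ (or_intror h)))).
  replace (Rsum_list f l + Rsum_list g l - (a + b))
    with ((Rsum_list f l - a) + (Rsum_list g l - b)) by ring.
  eapply Rle_lt_trans; [apply Rabs_triang|]. lra.
Qed.

Lemma HasSumR_scal (k : R) (f : W -> R) a : HasSumR f a -> HasSumR (fun x => k * f x) (k * a).
Proof.
  intros [Sf Hf]. split; [apply RSummable_scal; auto|].
  intros eps He.
  assert (Hk : 0 < Rabs k + 1) by (pose proof (Rabs_pos k); lra).
  destruct (Hf (eps / (Rabs k + 1))) as [l1 H1]; [apply Rdiv_lt_0_compat; lra|].
  exists l1. intros l Hl Hi. rewrite Rsum_scal.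
  replace (k * Rsum_list f l - k * a) with (k * (Rsum_list f l - a)) by ring.
  rewrite Rabs_mult. specialize (H1 l Hl Hi).
  pose proof (Rabs_pos k). pose proof (Rabs_pos (Rsum_list f l - a)).
  apply Rle_lt_trans with ((Rabs k + 1) * Rabs (Rsum_list f l - a)); [nra|].
  pose proof (Rmult_lt_compat_l _ _ _ Hk H1) as H2.
  replace ((Rabs k + 1) * (eps / (Rabs k + 1))) with eps in H2 by (field; lra). lra.
Qed.

Lemma HasSumR_minus (f g : W -> R) a b :
  HasSumR f a -> HasSumR g b -> HasSumR (fun x => f x - g x) (a - b).
Proof.
  intros A B. apply (HasSumR_scal (-1)) in B.
  apply (HasSumR_ext (fun x => f x + -1 * g x)); [intros; ring|].
  replace (a - b) with (a + -1 * b) by ring. apply HasSumR_plus; auto.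
Qed.

Lemma HasSumR_finite (g : W -> R) l : NoDup l -> (forall x, ~ In x l -> g x = 0) ->
  HasSumR g (Rsum_list g l).
Proof.
  intros Hl Hz. split.
  - exists (Rsum_list (fun x => Rabs (g x)) l). intros l' Hl'.
    set (fl := filter (fun x => if in_dec classic_eq_dec x l then true else false) l').
    assert (Hf : forall x, In x fl <-> In x l' /\ In x l).
    { intros x; unfold fl; rewrite filter_In.
      destruct (in_dec classic_eq_dec x l); split; intros [A B]; auto; try discriminate; tauto. }
    assert (Hfn : NoDup fl) by (apply NoDup_filter; auto).
    rewrite (Rsum_incl_support _ fl l' Hfn Hl').
    + apply Rsum_le_incl; [intros; apply Rabs_pos | auto |].
      intros x Hx. apply Hf in Hx; tauto.
    + intros x Hx; apply Hf in Hx; tauto.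
    + intros x Hx Hn. rewrite Hz; [apply Rabs_R0|]. intro Hxl; apply Hn, Hf; auto.
  - intros eps He. exists l. intros l' Hl' Hi.
    rewrite (Rsum_incl_support g l l'); auto. unfold Rminus; rewrite Rplus_opp_r, Rabs_R0; auto.
Qed.

Lemma HasSumR_zero : HasSumR (fun _ : W => 0) 0.
Proof. apply (HasSumR_finite _ nil); [constructor | auto]. Qed.

Lemma HasSumR_partial_le (h : W -> R) s : (forall x, 0 <= h x) -> HasSumR h s ->
  forall l, NoDup l -> Rsum_list h l <= s.
Proof.
  intros Hh [_ H] l Hl. apply Rnot_lt_le. intro Hlt.
  destruct (H (Rsum_list h l - s)) as [l0 H0]; [lra|].
  specialize (H0 (list_union l0 l) (NoDup_list_union _ _) (incl_list_union_l _ _)).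
  assert (Rsum_list h l <= Rsum_list h (list_union l0 l))
    by (apply Rsum_le_incl; auto; apply incl_list_union_r).
  apply Rabs_def2 in H0. lra.
Qed.

Lemma HasSumR_le_bound (h : W -> R) s M : HasSumR h s ->
  (forall l, NoDup l -> Rsum_list h l <= M) -> s <= M.
Proof.
  intros [_ H] HM. apply Rnot_lt_le. intro Hlt.
  destruct (H (s - M)) as [l0 H0]; [lra|].
  specialize (H0 (nodup classic_eq_dec l0) (NoDup_nodup _ _) (fun x h => proj2 (nodup_In _ _ _) h)).
  specialize (HM _ (NoDup_nodup classic_eq_dec l0)). apply Rabs_def2 in H0. lra.
Qed.

Lemma HasSumR_ge0 (h : W -> R) s : (forall x, 0 <= h x) -> HasSumR h s -> 0 <= s.
Proof. intros Hh Hs. apply (HasSumR_partial_le h s Hh Hs nil); constructor. Qed.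

Lemma HasSumR_term_le (h : W -> R) s x : (forall x, 0 <= h x) -> HasSumR h s -> h x <= s.
Proof.
  intros Hh Hs. pose proof (HasSumR_partial_le h s Hh Hs (x :: nil)) as H. simpl in H.
  assert (h x + 0 <= s) by (apply H; constructor; [simpl; tauto | constructor]). lra.
Qed.

(* The sum of a nonnegative family is the supremum of its finite partial sums. *)
Lemma RSummable_nonneg_HasSumR (h : W -> R) :
  (forall x, 0 <= h x) -> RSummable h -> exists s, HasSumR h s.
Proof.
  intros Hh [M HM].
  set (E := fun r => exists l, NoDup l /\ r = Rsum_list h l).
  assert (Hb : bound E).
  { exists M. intros r [l [Hl ->]]. eapply Rle_trans; [|apply (HM l Hl)].
    apply Rsum_le. intros; rewrite Rabs_pos_eq; auto; lra. }
  assert (Hne : exists x, E x) by (exists 0; exists nil; split; [constructor | auto]).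
  destruct (completeness E Hb Hne) as [S [HS1 HS2]].
  exists S. split; [exists M; auto|].
  intros eps He.
  assert (exists l0, NoDup l0 /\ S - eps < Rsum_list h l0) as [l0 [Hl0 H0]].
  { apply NNPP. intro Hn. assert (S <= S - eps); [|lra].
    apply HS2. intros r [l [Hl ->]]. apply Rnot_lt_le. intro Hlt. apply Hn. exists l; auto. }
  exists l0. intros l Hl Hi.
  assert (Rsum_list h l0 <= Rsum_list h l) by (apply Rsum_le_incl; auto).
  assert (Rsum_list h l <= S) by (apply HS1; exists l; auto).
  apply Rabs_def1; lra.
Qed.

Lemma RSummable_HasSumR (g : W -> R) : RSummable g -> exists s, HasSumR g s.
Proof.
  intros Hg.
  destruct (RSummable_nonneg_HasSumR (fun x => Rmax (g x) 0)) as [a Ha].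
  { intros; apply Rmax_r. }
  { eapply RSummable_le; [|apply Hg]. intros x. unfold Rmax; destruct (Rle_dec (g x) 0);
    rewrite ?Rabs_R0; [apply Rabs_pos | lra]. }
  destruct (RSummable_nonneg_HasSumR (fun x => Rmax (- g x) 0)) as [b Hb].
  { intros; apply Rmax_r. }
  { eapply RSummable_le; [|apply Hg]. intros x. unfold Rmax; destruct (Rle_dec (- g x) 0);
    rewrite ?Rabs_R0; [apply Rabs_pos | rewrite Rabs_Ropp; lra]. }
  exists (a - b). eapply HasSumR_ext; [|apply (HasSumR_minus _ _ _ _ Ha Hb)].
  intros x; simpl. unfold Rmax; destruct (Rle_dec (g x) 0), (Rle_dec (- g x) 0); lra.
Qed.

Lemma RSummable_comp_inj {U : Type} (e : U -> W) (g : W -> R) :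
  Injective e -> RSummable g -> RSummable (fun a => g (e a)).
Proof.
  intros He [M HM]. exists M. intros l Hl.
  assert (Rsum_list (fun a => Rabs (g (e a))) l = Rsum_list (fun x => Rabs (g x)) (map e l)).
  { clear. induction l; simpl; auto. rewrite IHl; auto. }
  rewrite H. apply HM. apply Injective_map_NoDup; auto.
Qed.

End RealSums.

Section Reindexing.
Context {W U : Type} (e : W -> U) (e_inj : forall w1 w2, e w1 = e w2 -> w1 = w2).

Definition preimage_opt (u : U) : option W :=
  match excluded_middle_informative (exists w, e w = u) with
  | left H => Some (proj1_sig (constructive_indefinite_description _ H))
  | right _ => None
  end.

Lemma preimage_opt_Some u w : preimage_opt u = Some w -> e w = u.
Proof.
  unfold preimage_opt. destruct (excluded_middle_informative _) as [H|H]; [|discriminate].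
  intros Heq; inversion Heq. destruct (constructive_indefinite_description _ H); simpl; auto.
Qed.

Lemma preimage_opt_e w : preimage_opt (e w) = Some w.
Proof.
  unfold preimage_opt. destruct (excluded_middle_informative _) as [H|H].
  - f_equal. destruct (constructive_indefinite_description _ H); simpl; auto.
  - exfalso; apply H; exists w; auto.
Qed.

Lemma preimage_opt_None u : preimage_opt u = None -> forall w, e w <> u.
Proof. intros H w Hw. subst. rewrite preimage_opt_e in H. discriminate. Qed.

Definition preimage_list (l : list U) : list W :=
  flat_map (fun u => match preimage_opt u with Some w => w :: nil | None => nil end) l.

Lemma In_preimage_list l w : In w (preimage_list l) <-> In (e w) l.
Proof.
  unfold preimage_list. rewrite in_flat_map. split.
  - intros [u [Hu Hw]]. destruct (preimage_opt u) eqn:E; [|contradiction].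
    destruct Hw as [->|[]]. apply preimage_opt_Some in E. subst; auto.
  - intros H. exists (e w). rewrite preimage_opt_e. simpl; auto.
Qed.

Lemma NoDup_preimage_list l : NoDup l -> NoDup (preimage_list l).
Proof.
  induction 1; simpl; [constructor|].
  destruct (preimage_opt x) eqn:E; simpl; auto.
  constructor; auto. rewrite In_preimage_list. apply preimage_opt_Some in E. subst; auto.
Qed.

Lemma Rsum_preimage_list (g : U -> R) l : (forall u, g u <> 0 -> exists w, e w = u) ->
  Rsum_list g l = Rsum_list (fun w => g (e w)) (preimage_list l).
Proof.
  intros Hg. induction l as [|u l IH]; simpl; auto.
  destruct (preimage_opt u) eqn:E; simpl.
  - apply preimage_opt_Some in E; subst. rewrite IH; auto.
  - destruct (Req_dec (g u) 0) as [H0|H0].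
    + rewrite H0, IH; ring.
    + destruct (Hg u H0) as [w Hw]. exfalso; apply (preimage_opt_None u E w Hw).
Qed.

Lemma HasSumR_reindex (g : U -> R) s : (forall u, g u <> 0 -> exists w, e w = u) ->
  HasSumR (fun w => g (e w)) s -> HasSumR g s.
Proof.
  intros Hg [[M HM] Hc]. split.
  - exists M. intros l Hl. rewrite (Rsum_preimage_list (fun u => Rabs (g u))).
    + apply HM, NoDup_preimage_list; auto.
    + intros u Hu. apply Hg. intro H0; apply Hu; rewrite H0; apply Rabs_R0.
  - intros eps He. destruct (Hc eps He) as [l0 H0]. exists (map e l0).
    intros l Hl Hi. rewrite (Rsum_preimage_list g l Hg). apply H0.
    + apply NoDup_preimage_list; auto.
    + intros w Hw. apply In_preimage_list. apply Hi. apply in_map; auto.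
Qed.

End Reindexing.

Lemma HasSumR_swap {V : Type} (h : V * V -> R) s :
  HasSumR h s -> HasSumR (fun p => h (snd p, fst p)) s.
Proof.
  intros H. apply (HasSumR_reindex (fun p : V * V => (snd p, fst p))).
  - intros [a b] [c d]; simpl; intros Heq; inversion Heq; auto.
  - intros [a b] _. exists (b, a); auto.
  - eapply HasSumR_ext; [|apply H]. intros [a b]; auto.
Qed.

Lemma HasSumR_row {V : Type} (x : V) (g : V -> R) s :
  HasSumR g s ->
  HasSumR (fun p : V * V => if classic_eq_dec (fst p) x then g (snd p) else 0) s.
Proof.
  intros H. apply (HasSumR_reindex (fun y => (x, y))).
  - intros a b Heq; inversion Heq; auto.
  - intros [a b] Hne. simpl in Hne. destruct (classic_eq_dec a x) as [->|]; [|lra].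
    exists b; auto.
  - eapply HasSumR_ext; [|apply H]. intros y; simpl.
    destruct (classic_eq_dec x x); [auto | congruence].
Qed.

Lemma HasSumR_sum3 {A B C} (g : A + (B + C) -> R) s1 s2 s3 :
  HasSumR (fun a => g (inl a)) s1 ->
  HasSumR (fun x => g (inr (inl x))) s2 ->
  HasSumR (fun x => g (inr (inr x))) s3 ->
  HasSumR g (s1 + s2 + s3).
Proof.
  intros H1 H2 H3.
  set (g1 := fun i : A + (B + C) => match i with inl a => g (inl a) | _ => 0 end).
  set (g2 := fun i : A + (B + C) => match i with inr (inl a) => g (inr (inl a)) | _ => 0 end).
  set (g3 := fun i : A + (B + C) => match i with inr (inr a) => g (inr (inr a)) | _ => 0 end).
  assert (K1 : HasSumR g1 s1).
  { apply (HasSumR_reindex (@inl A (B + C))); [intros a a' E; inversion E; auto| |auto].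
    intros [a|[a|a]] Hn; simpl in Hn; try lra. exists a; auto. }
  assert (K2 : HasSumR g2 s2).
  { apply (HasSumR_reindex (fun x : B => @inr A (B + C) (inl x)));
      [intros a a' E; inversion E; auto| |auto].
    intros [a|[a|a]] Hn; simpl in Hn; try lra. exists a; auto. }
  assert (K3 : HasSumR g3 s3).
  { apply (HasSumR_reindex (fun x : C => @inr A (B + C) (inr x)));
      [intros a a' E; inversion E; auto| |auto].
    intros [a|[a|a]] Hn; simpl in Hn; try lra. exists a; auto. }
  eapply HasSumR_ext; [|apply (HasSumR_plus _ _ _ _ (HasSumR_plus _ _ _ _ K1 K2) K3)].
  intros [a|[a|a]]; simpl; ring.
Qed.

Lemma HasSumR_Rsum_list {A B} (F : A -> B -> R) (s : A -> R) l :
  (forall x, In x l -> HasSumR (F x) (s x)) ->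
  HasSumR (fun p => Rsum_list (fun x => F x p) l) (Rsum_list s l).
Proof.
  induction l as [|a l IH]; intros H; simpl.
  - apply HasSumR_zero.
  - apply (HasSumR_plus (F a) (fun p => Rsum_list (fun x => F x p) l)).
    + apply H; left; auto.
    + apply IH; intros; apply H; right; auto.
Qed.

Lemma Rsum_list_delta {A} (a : A) (F : A -> R) l : NoDup l ->
  Rsum_list (fun x => if classic_eq_dec a x then F x else 0) l =
  if in_dec classic_eq_dec a l then F a else 0.
Proof.
  induction 1; simpl; auto.
  destruct (classic_eq_dec a x) as [<-|ne].
  - rewrite IHNoDup. destruct (in_dec classic_eq_dec a l); [contradiction|].
    destruct (classic_eq_dec a a); [ring | congruence].
  - rewrite IHNoDup. destruct (classic_eq_dec x a); [congruence|].
    destruct (in_dec classic_eq_dec a l); ring.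
Qed.

(** * Cauchy–Schwarz, Minkowski and Fatou for unordered sums *)

Lemma Rsum_Cauchy_Schwarz {W} (x y : W -> R) l :
  Rsum_list (fun i => x i * y i) l <=
  sqrt (Rsum_list (fun i => x i * x i) l) * sqrt (Rsum_list (fun i => y i * y i) l).
Proof.
  induction l as [|a l IH]; simpl.
  - rewrite sqrt_0; lra.
  - set (X := Rsum_list (fun i => x i * x i) l) in *.
    set (Y := Rsum_list (fun i => y i * y i) l) in *.
    assert (HX : 0 <= X) by (apply Rsum_nonneg; intros; nra).
    assert (HY : 0 <= Y) by (apply Rsum_nonneg; intros; nra).
    rewrite <- sqrt_mult by nra.
    apply Rle_trans with (sqrt X * sqrt Y + x a * y a); [lra|].
    apply Rle_trans with (Rabs (sqrt X * sqrt Y + x a * y a)); [apply Rle_abs|].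
    rewrite <- sqrt_Rsqr_abs. apply sqrt_le_1_alt. unfold Rsqr.
    pose proof (sqrt_sqrt X HX); pose proof (sqrt_sqrt Y HY).
    pose proof (sqrt_pos X); pose proof (sqrt_pos Y).
    set (p := sqrt X) in *. set (q := sqrt Y) in *.
    rewrite <- H, <- H0. pose proof (Rle_0_sqr (p * y a - x a * q)); unfold Rsqr in *; nra.
Qed.

Lemma Rsum_Minkowski {W} (x y : W -> R) l :
  let X := sqrt (Rsum_list (fun i => x i * x i) l) in
  let Y := sqrt (Rsum_list (fun i => y i * y i) l) in
  Rsum_list (fun i => (x i + y i) * (x i + y i)) l <= (X + Y) * (X + Y).
Proof.
  intros X Y.
  rewrite (Rsum_ext _ (fun i => (x i * x i + y i * y i) + 2 * (x i * y i))) by (intros; ring).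
  rewrite Rsum_plus, Rsum_plus, Rsum_scal.
  pose proof (Rsum_Cauchy_Schwarz x y l).
  assert (0 <= Rsum_list (fun i => x i * x i) l) by (apply Rsum_nonneg; intros; nra).
  assert (0 <= Rsum_list (fun i => y i * y i) l) by (apply Rsum_nonneg; intros; nra).
  unfold X, Y. rewrite <- (sqrt_sqrt _ H0) at 1. rewrite <- (sqrt_sqrt _ H1) at 1. nra.
Qed.

Lemma HasSumR_Minkowski {W} (x y h : W -> R) X Y :
  (forall i, 0 <= h i <= (x i + y i) * (x i + y i)) ->
  HasSumR (fun i => x i * x i) X -> HasSumR (fun i => y i * y i) Y ->
  exists H, HasSumR h H /\ sqrt H <= sqrt X + sqrt Y.
Proof.
  intros Hh HXs HYs.
  assert (HX0 : forall i, 0 <= x i * x i) by (intros; nra).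
  assert (HY0 : forall i, 0 <= y i * y i) by (intros; nra).
  assert (Hb : forall l, NoDup l -> Rsum_list h l <= (sqrt X + sqrt Y) * (sqrt X + sqrt Y)).
  { intros l Hl. eapply Rle_trans; [apply Rsum_le; intros i; apply (proj2 (Hh i))|].
    eapply Rle_trans; [apply Rsum_Minkowski|].
    pose proof (HasSumR_partial_le _ _ HX0 HXs l Hl) as H1.
    pose proof (HasSumR_partial_le _ _ HY0 HYs l Hl) as H2.
    apply sqrt_le_1_alt in H1, H2.
    pose proof (sqrt_pos (Rsum_list (fun i => x i * x i) l)).
    pose proof (sqrt_pos (Rsum_list (fun i => y i * y i) l)). simpl. nra. }
  destruct (RSummable_nonneg_HasSumR h) as [H HH].
  { intros i; apply Hh. }
  { exists ((sqrt X + sqrt Y) * (sqrt X + sqrt Y)). intros l Hl.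
    rewrite (Rsum_ext _ h) by (intros i; apply Rabs_pos_eq, Hh). auto. }
  exists H. split; auto.
  pose proof (HasSumR_le_bound _ _ _ HH Hb) as Hle.
  apply sqrt_le_1_alt in Hle. rewrite sqrt_square in Hle; auto.
  pose proof (sqrt_pos X); pose proof (sqrt_pos Y); lra.
Qed.

Lemma Un_cv_le (u : nat -> R) L M N :
  Un_cv u L -> (forall k, (N <= k)%nat -> u k <= M) -> L <= M.
Proof.
  intros Hc Hb. apply Rnot_lt_le. intro Hlt.
  destruct (Hc (L - M)) as [K HK]; [lra|].
  specialize (HK (max K N) (Nat.le_max_l _ _)). specialize (Hb (max K N) (Nat.le_max_r _ _)).
  unfold Rdist in HK. apply Rabs_def2 in HK. lra.
Qed.

Lemma Un_cv_Rsum_list {W} (fk : nat -> W -> R) (f : W -> R) l :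
  (forall i, Un_cv (fun k => fk k i) (f i)) ->
  Un_cv (fun k => Rsum_list (fk k) l) (Rsum_list f l).
Proof.
  intros H. induction l as [|a l IH]; simpl.
  - intros eps He. exists O. intros; unfold Rdist; rewrite Rminus_0_r, Rabs_R0; auto.
  - apply CV_plus; auto.
Qed.

Lemma Fatou_HasSumR {W} (fk : nat -> W -> R) (f : W -> R) M N :
  (forall i, 0 <= f i) -> (forall i, Un_cv (fun k => fk k i) (f i)) ->
  (forall k, (N <= k)%nat -> forall l, NoDup l -> Rsum_list (fk k) l <= M) ->
  exists s, HasSumR f s /\ s <= M.
Proof.
  intros Hf Hc Hb.
  assert (Hp : forall l, NoDup l -> Rsum_list f l <= M).
  { intros l Hl. apply (Un_cv_le _ _ M N (Un_cv_Rsum_list fk f l Hc)).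
    intros k Hk; apply Hb; auto. }
  destruct (RSummable_nonneg_HasSumR f Hf) as [s Hs].
  { exists M; intros l Hl. rewrite (Rsum_ext _ f) by (intros; apply Rabs_pos_eq; auto). auto. }
  exists s; split; auto. apply (HasSumR_le_bound _ _ _ Hs Hp).
Qed.

Lemma discriminant_le A B C :
  0 <= A -> 0 <= C -> (forall t, 0 <= A - 2 * t * B + t * t * C) -> B * B <= A * C.
Proof.
  intros HA0 HC0 H. destruct (Req_dec C 0) as [E|E].
  - subst. destruct (Req_dec B 0) as [->|NB]; [lra|].
    specialize (H ((A + 1) / (2 * B))). exfalso.
    replace (A - 2 * ((A + 1) / (2 * B)) * B + (A + 1) / (2 * B) * ((A + 1) / (2 * B)) * 0)
      with (-1) in H by (field; auto). lra.
  - specialize (H (B / C)).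
    replace (A - 2 * (B / C) * B + B / C * (B / C) * C) with (A - B * B / C) in H by (field; auto).
    assert (0 < C) by lra.
    assert (B * B / C <= A) by lra.
    apply (Rmult_le_compat_r C) in H1; [|lra]. unfold Rdiv in H1.
    rewrite Rmult_assoc, Rinv_l in H1 by auto. lra.
Qed.

(** * Complex numbers and complex sums *)

Lemma Cx_eq (z w : Cx) : fst z = fst w -> snd z = snd w -> z = w.
Proof. destruct z, w; simpl; intros; subst; auto. Qed.

Ltac Cring := apply Cx_eq; simpl; ring.

Lemma Cabs_pos z : 0 <= Cabs z.
Proof. unfold Cabs; apply sqrt_pos. Qed.

Lemma Cabs_sq z : Cabs z * Cabs z = fst z * fst z + snd z * snd z.
Proof. unfold Cabs. apply sqrt_sqrt. nra. Qed.

Lemma Cabs_ge_fst z : Rabs (fst z) <= Cabs z.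
Proof.
  unfold Cabs. rewrite <- sqrt_Rsqr_abs. apply sqrt_le_1_alt. unfold Rsqr.
  pose proof (Rle_0_sqr (snd z)). unfold Rsqr in H. lra.
Qed.

Lemma Cabs_ge_snd z : Rabs (snd z) <= Cabs z.
Proof.
  unfold Cabs. rewrite <- sqrt_Rsqr_abs. apply sqrt_le_1_alt. unfold Rsqr.
  pose proof (Rle_0_sqr (fst z)). unfold Rsqr in H. lra.
Qed.

Lemma Cabs_le_Rabs_sum z : Cabs z <= Rabs (fst z) + Rabs (snd z).
Proof.
  pose proof (Rabs_pos (fst z)); pose proof (Rabs_pos (snd z)).
  unfold Cabs. rewrite <- (sqrt_Rsqr (Rabs (fst z) + Rabs (snd z))) by lra.
  apply sqrt_le_1_alt. unfold Rsqr.
  rewrite <- (Rabs_pos_eq (fst z * fst z)) by nra. rewrite <- (Rabs_pos_eq (snd z * snd z)) by nra.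
  rewrite !Rabs_mult. nra.
Qed.

Lemma Cabs_RC r : Cabs (RC r) = Rabs r.
Proof. unfold Cabs, RC; simpl. rewrite Rmult_0_l, Rplus_0_r. apply sqrt_Rsqr_abs. Qed.

Lemma Cabs_C0 : Cabs C0 = 0.
Proof. unfold Cabs, C0; simpl. rewrite Rmult_0_l, Rplus_0_r. apply sqrt_0. Qed.

Lemma Cabs_mult z w : Cabs (Cmult z w) = Cabs z * Cabs w.
Proof. unfold Cabs, Cmult; simpl. rewrite <- sqrt_mult by nra. f_equal. ring. Qed.

Lemma Cabs_conj z : Cabs (Cconj z) = Cabs z.
Proof. unfold Cabs, Cconj; simpl. f_equal; ring. Qed.

Lemma Cabs_opp z : Cabs (Copp z) = Cabs z.
Proof. unfold Cabs, Copp; simpl. f_equal; ring. Qed.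

Lemma Cabs_eq0 z : Cabs z = 0 -> z = C0.
Proof.
  intros H. pose proof (Cabs_ge_fst z); pose proof (Cabs_ge_snd z).
  rewrite H in *. apply Cx_eq; simpl;
    [destruct (Req_dec (fst z) 0) as [|Hn] | destruct (Req_dec (snd z) 0) as [|Hn]];
    auto; apply Rabs_pos_lt in Hn; lra.
Qed.

Lemma Cabs_triang z w : Cabs (Cplus z w) <= Cabs z + Cabs w.
Proof.
  pose proof (Cabs_pos z); pose proof (Cabs_pos w); pose proof (Cabs_pos (Cplus z w)).
  assert (Hdot : fst z * fst w + snd z * snd w <= Cabs z * Cabs w).
  { unfold Cabs. rewrite <- sqrt_mult by nra.
    apply Rle_trans with (Rabs (fst z * fst w + snd z * snd w)); [apply Rle_abs|].
    rewrite <- sqrt_Rsqr_abs. apply sqrt_le_1_alt. unfold Rsqr.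
    pose proof (Rle_0_sqr (fst z * snd w - snd z * fst w)); unfold Rsqr in *; nra. }
  assert (Cabs (Cplus z w) * Cabs (Cplus z w) <= (Cabs z + Cabs w) * (Cabs z + Cabs w)).
  { replace ((Cabs z + Cabs w) * (Cabs z + Cabs w))
      with (Cabs z * Cabs z + Cabs w * Cabs w + 2 * (Cabs z * Cabs w)) by ring.
    rewrite !Cabs_sq. unfold Cplus; simpl. nra. }
  nra.
Qed.

Lemma Cabs_minus_le z w : Cabs (Cminus z w) <= Cabs z + Cabs w.
Proof. rewrite <- (Cabs_opp w). apply Cabs_triang. Qed.

Lemma Cabs_minus_sym z w : Cabs (Cminus z w) = Cabs (Cminus w z).
Proof. unfold Cabs, Cminus, Cplus, Copp; simpl. f_equal; ring. Qed.

Lemma Cabs_triang_inv z w : Rabs (Cabs z - Cabs w) <= Cabs (Cminus z w).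
Proof.
  apply Rabs_le. split.
  - pose proof (Cabs_triang (Cminus w z) z) as H.
    replace (Cplus (Cminus w z) z) with w in H by Cring. rewrite Cabs_minus_sym in H. lra.
  - pose proof (Cabs_triang (Cminus z w) w) as H.
    replace (Cplus (Cminus z w) w) with z in H by Cring. lra.
Qed.

Lemma Cmult_conj_self z : Cmult z (Cconj z) = RC (Cabs z * Cabs z).
Proof. rewrite Cabs_sq. unfold RC, Cconj, Cmult; Cring. Qed.

Lemma Cmult_RC_inj r z w : Cmult (RC r) z = w -> r <> 0 -> z = Cmult (RC (/ r)) w.
Proof. intros <- Hr. unfold RC; apply Cx_eq; simpl; field; auto. Qed.

Lemma Cminus_eq0 z w : Cminus z w = C0 -> z = w.
Proof.
  intros H. apply (f_equal fst) in H as H1. apply (f_equal snd) in H as H2.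
  unfold Cminus, Cplus, Copp, C0 in *; simpl in *. apply Cx_eq; lra.
Qed.

Lemma Cabs_le_eps_eq0 z K :
  0 <= K -> (forall eps, 0 < eps -> Cabs z <= K * eps) -> z = C0.
Proof.
  intros HK H. apply Cabs_eq0. pose proof (Cabs_pos z).
  apply Rle_antisym; [|auto]. apply Rnot_lt_le; intro Hlt.
  specialize (H (Cabs z / (2 * (K + 1)))).
  assert (Hpos : 0 < Cabs z / (2 * (K + 1))) by (apply Rdiv_lt_0_compat; lra).
  specialize (H Hpos).
  replace (K * (Cabs z / (2 * (K + 1)))) with (Cabs z * (K / (2 * (K + 1)))) in H by (field; lra).
  assert (K / (2 * (K + 1)) < 1).
  { apply (Rmult_lt_reg_r (2 * (K + 1))); [lra|]. unfold Rdiv.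
    rewrite Rmult_assoc, Rinv_l; lra. }
  nra.
Qed.

Lemma Cabs_le_div_sqrt z mx N :
  0 < mx -> 0 <= N -> Cabs z * Cabs z * mx <= N * N -> Cabs z <= N / sqrt mx.
Proof.
  intros Hm HN H. pose proof (sqrt_lt_R0 mx Hm). pose proof (Cabs_pos z).
  pose proof (sqrt_sqrt mx (Rlt_le _ _ Hm)) as Hsq.
  apply (Rmult_le_reg_r (sqrt mx)); auto. unfold Rdiv. rewrite Rmult_assoc, Rinv_l by lra.
  apply Rnot_lt_le; intro Hlt.
  assert (N * N < Cabs z * sqrt mx * (Cabs z * sqrt mx)) by nra.
  replace (Cabs z * sqrt mx * (Cabs z * sqrt mx)) with (Cabs z * Cabs z * (sqrt mx * sqrt mx))
    in H2 by ring.
  rewrite Hsq in H2. lra.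
Qed.

Section ComplexSums.
Context {V : Type}.

Lemma Csum_fst (f : V -> Cx) l : fst (Csum_list f l) = Rsum_list (fun x => fst (f x)) l.
Proof. induction l; simpl; auto. rewrite IHl; auto. Qed.

Lemma Csum_snd (f : V -> Cx) l : snd (Csum_list f l) = Rsum_list (fun x => snd (f x)) l.
Proof. induction l; simpl; auto. rewrite IHl; auto. Qed.

Lemma Csummable_iff (f : V -> Cx) :
  Csummable f <-> RSummable (fun x => fst (f x)) /\ RSummable (fun x => snd (f x)).
Proof.
  split.
  - intros [M HM]. split; exists M; intros l Hl; eapply Rle_trans;
      [|apply (HM l Hl) | |apply (HM l Hl)];
      apply Rsum_le; intros; [apply Cabs_ge_fst | apply Cabs_ge_snd].
  - intros [[M1 H1] [M2 H2]]. exists (M1 + M2). intros l Hl.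
    eapply Rle_trans.
    { apply (Rsum_le _ (fun x => Rabs (fst (f x)) + Rabs (snd (f x)))).
      intros; apply Cabs_le_Rabs_sum. }
    rewrite Rsum_plus. specialize (H1 l Hl); specialize (H2 l Hl); lra.
Qed.

Lemma HasSumC_iff (f : V -> Cx) s : HasSumC f s <->
  HasSumR (fun x => fst (f x)) (fst s) /\ HasSumR (fun x => snd (f x)) (snd s).
Proof.
  assert (Efst : forall l, Rsum_list (fun x => fst (f x)) l - fst s = fst (Cminus (Csum_list f l) s))
    by (intros; unfold Cminus, Cplus, Copp; simpl; rewrite Csum_fst; ring).
  assert (Esnd : forall l, Rsum_list (fun x => snd (f x)) l - snd s = snd (Cminus (Csum_list f l) s))
    by (intros; unfold Cminus, Cplus, Copp; simpl; rewrite Csum_snd; ring).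
  split.
  - intros [Hs Hc]. apply Csummable_iff in Hs. destruct Hs as [H1 H2].
    split; split; auto; intros eps He; destruct (Hc eps He) as [l0 H0]; exists l0;
      intros l Hl Hi; specialize (H0 l Hl Hi); [rewrite Efst | rewrite Esnd];
      eapply Rle_lt_trans; [apply Cabs_ge_fst | apply H0 | apply Cabs_ge_snd | apply H0].
  - intros [[S1 H1] [S2 H2]]. split; [apply Csummable_iff; auto|].
    intros eps He. destruct (H1 (eps / 2)) as [l1 A]; [lra|].
    destruct (H2 (eps / 2)) as [l2 B]; [lra|].
    exists (l1 ++ l2). intros l Hl Hi.
    specialize (A l Hl (fun x h => Hi x (in_or_app _ _ _ (or_introl h)))).
    specialize (B l Hl (fun x h => Hi x (in_or_app _ _ _ (or_intror h)))).
    rewrite Efst in A. rewrite Esnd in B.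
    eapply Rle_lt_trans; [apply Cabs_le_Rabs_sum|]. lra.
Qed.

Lemma HasSumC_unique (f : V -> Cx) s t : HasSumC f s -> HasSumC f t -> s = t.
Proof.
  rewrite !HasSumC_iff. intros [A1 A2] [B1 B2].
  apply Cx_eq; eapply HasSumR_unique; eauto.
Qed.

Lemma sumC_eq (f : V -> Cx) s : HasSumC f s -> sumC f = s.
Proof.
  intros H. unfold sumC. destruct (excluded_middle_informative _) as [E|E].
  - destruct (constructive_indefinite_description _ E) as [t Ht]; simpl.
    eapply HasSumC_unique; eauto.
  - exfalso; apply E; exists s; auto.
Qed.

Lemma Csummable_HasSumC (f : V -> Cx) : Csummable f -> HasSumC f (sumC f).
Proof.
  intros H. apply Csummable_iff in H. destruct H as [H1 H2].
  destruct (RSummable_HasSumR _ H1) as [a Ha]. destruct (RSummable_HasSumR _ H2) as [b Hb].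
  assert (HasSumC f (a, b)) by (apply HasSumC_iff; auto).
  rewrite (sumC_eq _ _ H); auto.
Qed.

Lemma HasSumC_summable (f : V -> Cx) s : HasSumC f s -> Csummable f.
Proof. intros [H _]; auto. Qed.

Lemma HasSumC_ext (f g : V -> Cx) s : (forall x, f x = g x) -> HasSumC f s -> HasSumC g s.
Proof. intros H. replace g with f; auto. apply functional_extensionality; auto. Qed.

Lemma HasSumC_plus (f g : V -> Cx) a b :
  HasSumC f a -> HasSumC g b -> HasSumC (fun x => Cplus (f x) (g x)) (Cplus a b).
Proof.
  rewrite !HasSumC_iff. intros [A1 A2] [B1 B2]. split; simpl; apply HasSumR_plus; auto.
Qed.

Lemma HasSumC_scal (k : Cx) (f : V -> Cx) a :
  HasSumC f a -> HasSumC (fun x => Cmult k (f x)) (Cmult k a).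
Proof.
  rewrite !HasSumC_iff. intros [A1 A2]. split; simpl.
  - apply HasSumR_minus; apply HasSumR_scal; auto.
  - apply HasSumR_plus; apply HasSumR_scal; auto.
Qed.

Lemma HasSumC_minus (f g : V -> Cx) a b :
  HasSumC f a -> HasSumC g b -> HasSumC (fun x => Cminus (f x) (g x)) (Cminus a b).
Proof.
  intros A B. apply HasSumC_plus; auto.
  apply (HasSumC_scal (RC (-1))) in B.
  replace (Copp b) with (Cmult (RC (-1)) b) by (unfold RC, Copp; Cring).
  eapply HasSumC_ext; [|apply B]. intros; unfold RC, Copp; Cring.
Qed.

Lemma HasSumC_conj (f : V -> Cx) s : HasSumC f s -> HasSumC (fun x => Cconj (f x)) (Cconj s).
Proof.
  rewrite !HasSumC_iff. intros [A B]; split; simpl; auto.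
  apply (HasSumR_scal (-1)) in B.
  eapply HasSumR_ext; [|replace (- snd s) with (-1 * snd s) by ring; apply B].
  intros; simpl; ring.
Qed.

Lemma HasSumC_finite (f : V -> Cx) l s : NoDup l -> (forall x, ~ In x l -> f x = C0) ->
  Csum_list f l = s -> HasSumC f s.
Proof.
  intros Hl Hz <-. apply HasSumC_iff. rewrite Csum_fst, Csum_snd.
  split; apply HasSumR_finite; auto; intros x Hx; rewrite (Hz x Hx); auto.
Qed.

Lemma Csummable_le (f : V -> Cx) (g : V -> R) :
  (forall x, Cabs (f x) <= g x) -> RSummable g -> Csummable f.
Proof.
  intros H [M HM]. exists M. intros l Hl. eapply Rle_trans; [|apply (HM l Hl)].
  apply Rsum_le. intros x. eapply Rle_trans; [apply H | apply Rle_abs].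
Qed.

Lemma Csummable_RC (g : V -> R) : Csummable (fun x => RC (g x)) <-> RSummable g.
Proof.
  split; intros [M HM]; exists M; intros l Hl; (eapply Rle_trans; [|apply (HM l Hl)]);
   apply Rsum_le; intros; rewrite Cabs_RC; lra.
Qed.

Lemma HasSumC_RC (g : V -> R) s : HasSumR g s -> HasSumC (fun x => RC (g x)) (RC s).
Proof. intros H. apply HasSumC_iff; simpl. split; auto. apply HasSumR_zero. Qed.

End ComplexSums.

(** * Finitely supported functions *)

Definition zero_fun {V : Type} : V -> Cx := fun _ => C0.

Ltac fun_ring := apply functional_extensionality; intros ?;
  unfold fplus, fminus, fscal, zero_fun, Cminus, Cplus, Copp, Cmult, C0, RC; Cring.

Lemma fminus_fplus_fscal {V : Type} (u v : V -> Cx) : fminus u v = fplus u (fscal (RC (-1)) v).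
Proof. fun_ring. Qed.

Section FinitelySupported.
Context {V : Type}.

Definition delta (x : V) : V -> Cx := fun y => if classic_eq_dec x y then RC 1 else C0.

Lemma Cc_zero : Cc (@zero_fun V).
Proof. exists nil. intros; reflexivity. Qed.

Lemma Cc_delta (x : V) : Cc (delta x).
Proof.
  exists (x :: nil). intros y Hy. unfold delta.
  destruct (classic_eq_dec x y); auto. subst; exfalso; apply Hy; left; auto.
Qed.

Lemma Cc_plus (u v : V -> Cx) : Cc u -> Cc v -> Cc (fplus u v).
Proof.
  intros [l1 H1] [l2 H2]. exists (l1 ++ l2). intros x Hx. unfold fplus.
  rewrite H1, H2; [unfold C0; Cring | |]; intro; apply Hx; apply in_or_app; auto.
Qed.

Lemma Cc_minus (u v : V -> Cx) : Cc u -> Cc v -> Cc (fminus u v).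
Proof.
  intros [l1 H1] [l2 H2]. exists (l1 ++ l2). intros x Hx. unfold fminus.
  rewrite H1, H2; [unfold C0, Cminus, Cplus, Copp; Cring | |];
    intro; apply Hx; apply in_or_app; auto.
Qed.

Lemma Cc_scal a (u : V -> Cx) : Cc u -> Cc (fscal a u).
Proof. intros [l1 H1]. exists l1. intros x Hx. unfold fscal. rewrite H1; auto. unfold C0; Cring. Qed.

Lemma Cc_NoDup_support (phi : V -> Cx) :
  Cc phi -> exists l, NoDup l /\ forall x, ~ In x l -> phi x = C0.
Proof.
  intros [l0 H]. exists (nodup classic_eq_dec l0). split; [apply NoDup_nodup|].
  intros x Hx; apply H. intro; apply Hx; apply nodup_In; auto.
Qed.

Lemma Cc_delta_ind (Pr : (V -> Cx) -> Prop) :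
  Pr zero_fun -> (forall a x w, Pr w -> Pr (fplus (fscal a (delta x)) w)) ->
  forall phi, Cc phi -> Pr phi.
Proof.
  intros H0 HS phi Hphi. destruct (Cc_NoDup_support phi Hphi) as [l [Hl Hz]].
  set (expand := fun (l : list V) (z : V) => Csum_list (fun y => Cmult (phi y) (delta y z)) l).
  assert (Hexp : forall (l : list V) z, NoDup l ->
    expand l z = if in_dec classic_eq_dec z l then phi z else C0).
  { clear Hl. intros l' z Hl'. induction Hl'; unfold expand in *; simpl; auto.
    rewrite IHHl'. unfold delta. destruct (classic_eq_dec x z) as [<-|ne].
    - destruct (in_dec classic_eq_dec x l0); [contradiction|].
      destruct (classic_eq_dec x x); [|congruence]. unfold RC, C0; Cring.
    - destruct (classic_eq_dec x z); [congruence|].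
      destruct (in_dec classic_eq_dec z l0); unfold C0; Cring. }
  replace phi with (expand l).
  - clear Hl Hz Hexp. induction l as [|a l IH]; [exact H0 | apply HS, IH].
  - apply functional_extensionality; intros z. rewrite Hexp by auto.
    destruct (in_dec classic_eq_dec z l); auto. symmetry; auto.
Qed.

End FinitelySupported.

(** * Sequences of functions *)

Definition norm_cv {V : Type} (N : (V -> Cx) -> R) (phi : nat -> V -> Cx) (u : V -> Cx) : Prop :=
  forall eps, 0 < eps -> exists K, forall n, (K <= n)%nat -> N (fminus (phi n) u) < eps.

Definition norm_Cauchy {V : Type} (N : (V -> Cx) -> R) (phi : nat -> V -> Cx) : Prop :=
  forall eps, 0 < eps -> exists K, forall n k, (K <= n)%nat -> (K <= k)%nat ->
    N (fminus (phi n) (phi k)) < eps.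

Definition pointwise_cv {V : Type} (phi : nat -> V -> Cx) (u : V -> Cx) : Prop :=
  forall x, Un_cv (fun n => Cabs (Cminus (phi n x) (u x))) 0.

Lemma inv_INR_S_pos n : 0 < / (INR n + 1).
Proof. apply Rinv_0_lt_compat. pose proof (pos_INR n); lra. Qed.

Lemma inv_INR_S_le_1 n : / (INR n + 1) <= 1.
Proof. pose proof (pos_INR n). rewrite <- Rinv_1. apply Rinv_le_contravar; lra. Qed.

Lemma inv_INR_S_small eps : 0 < eps -> exists N, forall n, (N <= n)%nat -> / (INR n + 1) < eps.
Proof.
  intros He. destruct (archimed_cor1 eps He) as [N [H1 H2]]. exists N. intros n Hn.
  apply le_INR in Hn. assert (0 < INR N) by (apply lt_0_INR; auto).
  eapply Rle_lt_trans; [|apply H1]. apply Rinv_le_contravar; lra.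
Qed.

Lemma approx_sequence {A : Type} (P : A -> Prop) (f : A -> R) :
  (forall eps, 0 < eps -> exists a, P a /\ f a < eps) ->
  exists s : nat -> A, forall n, P (s n) /\ f (s n) < / (INR n + 1).
Proof.
  intros H. assert (Hn : forall n, exists a, P a /\ f a < / (INR n + 1))
    by (intros; apply H, inv_INR_S_pos).
  exists (fun n => proj1_sig (constructive_indefinite_description _ (Hn n))).
  intros n. destruct (constructive_indefinite_description _ (Hn n)); auto.
Qed.

Lemma glb_approx {A : Type} (P : A -> Prop) (f : A -> R) :
  (exists a, P a) -> (forall a, P a -> 0 <= f a) ->
  exists d, 0 <= d /\ (forall a, P a -> d <= f a) /\
            forall eps, 0 < eps -> exists a, P a /\ f a < d + eps.
Proof.
  intros [a0 Ha0] Hf.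
  set (E := fun r => exists a, P a /\ r = - f a).
  assert (Eb : bound E) by (exists 0; intros r [a [Ha ->]]; pose proof (Hf a Ha); lra).
  destruct (completeness E Eb (ex_intro _ (- f a0) (ex_intro _ a0 (conj Ha0 eq_refl))))
    as [M [HM1 HM2]].
  exists (- M). split; [|split].
  - assert (M <= 0); [|lra]. apply HM2. intros r [a [Ha ->]]. pose proof (Hf a Ha); lra.
  - intros a Ha. assert (- f a <= M) by (apply HM1; exists a; auto). lra.
  - intros eps He. apply NNPP; intro Hn.
    assert (M <= M - eps); [|lra]. apply HM2. intros r [a [Ha ->]].
    apply Rnot_lt_le; intro Hlt. apply Hn. exists a; split; auto. lra.
Qed.

Lemma pointwise_cv_unique {V : Type} (phi : nat -> V -> Cx) u v :
  pointwise_cv phi u -> pointwise_cv phi v -> u = v.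
Proof.
  intros Hu Hv. apply functional_extensionality; intros x. apply Cminus_eq0.
  apply (Cabs_le_eps_eq0 _ 1); [lra|]. intros eps He.
  destruct (Hu x (eps / 2)) as [N1 H1]; [lra|]. destruct (Hv x (eps / 2)) as [N2 H2]; [lra|].
  specialize (H1 (max N1 N2) (Nat.le_max_l _ _)). specialize (H2 (max N1 N2) (Nat.le_max_r _ _)).
  unfold Rdist in H1, H2. rewrite Rminus_0_r, Rabs_pos_eq in H1, H2 by apply Cabs_pos.
  set (z := phi (max N1 N2) x) in *.
  replace (Cminus (u x) (v x)) with (Cminus (Cminus z (v x)) (Cminus z (u x)))
    by (unfold Cminus, Cplus, Copp; Cring).
  pose proof (Cabs_minus_le (Cminus z (v x)) (Cminus z (u x))). lra.
Qed.

Lemma pointwise_cv_of_bound {V : Type} (m : V -> R) (phi : nat -> V -> Cx) u (N : nat -> R) :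
  (forall x, 0 < m x) -> (forall n x, Cabs (Cminus (phi n x) (u x)) <= N n / sqrt (m x)) ->
  (forall eps, 0 < eps -> exists K, forall n, (K <= n)%nat -> N n < eps) ->
  pointwise_cv phi u.
Proof.
  intros Hm Hb HN x eps He. pose proof (sqrt_lt_R0 _ (Hm x)) as Hs.
  destruct (HN (eps * sqrt (m x))) as [K HK]; [nra|]. exists K. intros n Hn.
  unfold Rdist. rewrite Rminus_0_r, Rabs_pos_eq by apply Cabs_pos.
  eapply Rle_lt_trans; [apply Hb|]. apply (Rmult_lt_reg_r (sqrt (m x))); auto.
  unfold Rdiv. rewrite Rmult_assoc, Rinv_l by lra. specialize (HK n Hn). lra.
Qed.

(** * The graph Laplacian and the Neumann form *)

Section Setting.
Context {V : Type} (m : V -> R) (b : V -> V -> R) (c : V -> R).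
Hypothesis m_pos : forall x, 0 < m x.
Hypothesis c_nonneg : forall x, 0 <= c x.
Hypothesis b_nonneg : forall x y, 0 <= b x y.
Hypothesis b_diag : forall x, b x x = 0.
Hypothesis b_sym : forall x y, b x y = b y x.
Hypothesis b_summable : forall x, Csummable (fun y => RC (b x y)).

Local Notation nN := (formnorm m (QN b c)).

Definition deg (x : V) : R := fst (sumC (fun y => RC (b x y))).

Lemma HasSumR_deg x : HasSumR (fun y => b x y) (deg x).
Proof.
  pose proof (Csummable_HasSumC _ (b_summable x)) as K.
  apply HasSumC_iff in K. destruct K as [K _]. exact K.
Qed.

Lemma Ltilde_eq u x S : HasSumC (fun y => Cmult (RC (b x y)) (u y)) S ->
  Cmult (RC (m x)) (Ltilde m b c u x) = Cminus (Cmult (u x) (RC (deg x + c x))) S.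
Proof.
  intros HS.
  assert (E : sumC (fun y => Cmult (RC (b x y)) (Cminus (u x) (u y))) =
              Cminus (Cmult (u x) (RC (deg x))) S).
  { apply sumC_eq. eapply HasSumC_ext;
      [|apply (HasSumC_minus _ _ _ _ (HasSumC_scal (u x) _ _ (HasSumC_RC _ _ (HasSumR_deg x))) HS)].
    intros y; unfold RC; Cring. }
  unfold Ltilde. rewrite E. pose proof (m_pos x). unfold RC; apply Cx_eq; simpl; field; lra.
Qed.

Lemma HasSumC_b_delta y x : HasSumC (fun z => Cmult (RC (b y z)) (delta x z)) (RC (b y x)).
Proof.
  apply (HasSumC_finite _ (x :: nil)).
  - constructor; [simpl; tauto | constructor].
  - intros z Hz. unfold delta. destruct (classic_eq_dec x z).
    + subst; exfalso; apply Hz; left; auto.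
    + unfold C0, RC; Cring.
  - simpl; unfold delta; destruct (classic_eq_dec x x); [|congruence]; unfold RC, C0; Cring.
Qed.

Lemma Ltilde_delta_neq y x : y <> x -> Ltilde m b c (delta x) y = RC (- b y x / m y).
Proof.
  intros ne. pose proof (Ltilde_eq (delta x) y _ (HasSumC_b_delta y x)) as H.
  pose proof (m_pos y).
  replace (delta x y) with C0 in H by (unfold delta; destruct (classic_eq_dec x y); congruence).
  apply Cmult_RC_inj in H; [|lra]. rewrite H.
  unfold RC, C0; apply Cx_eq; simpl; field; lra.
Qed.

Lemma Ltilde_delta_eq x : Ltilde m b c (delta x) x = RC ((deg x + c x) / m x).
Proof.
  pose proof (Ltilde_eq (delta x) x _ (HasSumC_b_delta x x)) as H. pose proof (m_pos x).
  apply Cmult_RC_inj in H; [|lra]. rewrite H, b_diag.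
  unfold delta; destruct (classic_eq_dec x x); [|congruence].
  unfold RC, C0; apply Cx_eq; simpl; field; lra.
Qed.

(* The three parts of the Neumann norm [Q^(N)(w) + ||w||^2] are merged into one sum over the
   index set [edges + vertices + vertices]: [ndens w i = nweight i * |ndiff w i|^2].  Its
   square root is then an l^2 norm, so the triangle inequality is Minkowski's inequality. *)
Definition NIdx := ((V * V) + (V + V))%type.

Definition nweight (i : NIdx) : R :=
  match i with inl p => b (fst p) (snd p) / 2 | inr (inl x) => c x | inr (inr x) => m x end.

Definition ndiff (w : V -> Cx) (i : NIdx) : Cx :=
  match i with
  | inl p => Cminus (w (fst p)) (w (snd p))
  | inr (inl x) | inr (inr x) => w x
  end.

Definition ndens (w : V -> Cx) (i : NIdx) : R := nweight i * (Cabs (ndiff w i) * Cabs (ndiff w i)).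

Definition energy_b (w : V -> Cx) (p : V * V) : R :=
  b (fst p) (snd p) * Cabs (Cminus (w (fst p)) (w (snd p))) * Cabs (Cminus (w (fst p)) (w (snd p))).
Definition energy_c (w : V -> Cx) (x : V) : R := c x * Cabs (w x) * Cabs (w x).
Definition energy_m (w : V -> Cx) (x : V) : R := Cabs (w x) * Cabs (w x) * m x.

Lemma nweight_nonneg i : 0 <= nweight i.
Proof.
  destruct i as [p|[x|x]]; simpl;
    [pose proof (b_nonneg (fst p) (snd p)); lra | apply c_nonneg | pose proof (m_pos x); lra].
Qed.

Lemma ndens_nonneg w i : 0 <= ndens w i.
Proof. unfold ndens. pose proof (nweight_nonneg i). pose proof (Cabs_pos (ndiff w i)). nra. Qed.

Lemma energy_m_nonneg (u : V -> Cx) x : 0 <= energy_m u x.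
Proof. unfold energy_m. pose proof (m_pos x). pose proof (Cabs_pos (u x)). nra. Qed.

Lemma HasSumR_ndens w eb ec em :
  HasSumR (energy_b w) eb -> HasSumR (energy_c w) ec -> HasSumR (energy_m w) em ->
  HasSumR (ndens w) (eb / 2 + ec + em).
Proof.
  intros HB HC HM. apply HasSumR_sum3.
  - replace (eb / 2) with (/ 2 * eb) by field.
    eapply HasSumR_ext; [|apply (HasSumR_scal (/ 2) _ _ HB)].
    intros p; unfold ndens, energy_b; simpl. field.
  - eapply HasSumR_ext; [|apply HC]. intros p; unfold ndens, energy_c; simpl. ring.
  - eapply HasSumR_ext; [|apply HM]. intros p; unfold ndens, energy_m; simpl. ring.
Qed.

Lemma DQN_iff_energies w :
  DQN m b c w <-> RSummable (energy_b w) /\ RSummable (energy_c w) /\ RSummable (energy_m w).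
Proof. unfold DQN, l2. rewrite !Csummable_RC. unfold energy_b, energy_c, energy_m. tauto. Qed.

Lemma DQN_iff_ndens w : DQN m b c w <-> RSummable (ndens w).
Proof.
  rewrite DQN_iff_energies. split.
  - intros (B & C & M).
    destruct (RSummable_HasSumR _ B) as [eb Hb]. destruct (RSummable_HasSumR _ C) as [ec Hc].
    destruct (RSummable_HasSumR _ M) as [em Hm].
    eapply HasSumR_summable, HasSumR_ndens; eauto.
  - intros H. split; [|split].
    + apply (RSummable_comp_inj (@inl (V * V) (V + V))) in H; [|intros a a' E; inversion E; auto].
      apply (RSummable_scal 2) in H. eapply RSummable_le; [|apply H].
      intros p; unfold ndens, energy_b; simpl. right; f_equal; field.
    + apply (RSummable_comp_inj (fun x : V => @inr (V * V) (V + V) (inl x))) in H;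
        [|intros a a' E; inversion E; auto].
      eapply RSummable_le; [|apply H]. intros p; unfold ndens, energy_c; simpl. right; f_equal; ring.
    + apply (RSummable_comp_inj (fun x : V => @inr (V * V) (V + V) (inr x))) in H;
        [|intros a a' E; inversion E; auto].
      eapply RSummable_le; [|apply H]. intros p; unfold ndens, energy_m; simpl. right; f_equal; ring.
Qed.

Lemma Re_QN w eb ec :
  HasSumR (energy_b w) eb -> HasSumR (energy_c w) ec -> Re (QN b c w w) = eb / 2 + ec.
Proof.
  intros HB HC. unfold QN.
  rewrite (sumC_eq _ (RC eb)).
  2:{ eapply HasSumC_ext; [|apply (HasSumC_RC _ _ HB)]. intros p.
      rewrite Cmult_conj_self. unfold energy_b, RC; Cring. }
  rewrite (sumC_eq _ (RC ec)).
  2:{ eapply HasSumC_ext; [|apply (HasSumC_RC _ _ HC)]. intros p.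
      rewrite Cmult_conj_self. unfold energy_c, RC; Cring. }
  unfold Re, RC; simpl. field.
Qed.

Lemma Re_ip w em : HasSumR (energy_m w) em -> Re (ip m w w) = em.
Proof.
  intros HM. unfold ip. rewrite (sumC_eq _ (RC em)); [unfold Re, RC; auto|].
  eapply HasSumC_ext; [|apply (HasSumC_RC _ _ HM)]. intros p.
  rewrite Cmult_conj_self. unfold energy_m, RC; Cring.
Qed.

Lemma formnorm_QN w s : HasSumR (ndens w) s -> nN w = sqrt s.
Proof.
  intros H. assert (K : DQN m b c w) by (apply DQN_iff_ndens; eapply HasSumR_summable; eauto).
  apply DQN_iff_energies in K. destruct K as (B & C & M).
  destruct (RSummable_HasSumR _ B) as [eb Hb]. destruct (RSummable_HasSumR _ C) as [ec Hc].
  destruct (RSummable_HasSumR _ M) as [em Hm].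
  rewrite (HasSumR_unique _ _ _ H (HasSumR_ndens _ _ _ _ Hb Hc Hm)).
  unfold formnorm. rewrite (Re_QN _ _ _ Hb Hc), (Re_ip _ _ Hm). auto.
Qed.

Lemma ndens_triangle u v w su sv :
  (forall i, Cabs (ndiff w i) <= Cabs (ndiff u i) + Cabs (ndiff v i)) ->
  HasSumR (ndens u) su -> HasSumR (ndens v) sv ->
  exists s, HasSumR (ndens w) s /\ sqrt s <= sqrt su + sqrt sv.
Proof.
  intros Hw Hu Hv.
  assert (Hsq : forall i, sqrt (nweight i) * sqrt (nweight i) = nweight i)
    by (intros; apply sqrt_sqrt, nweight_nonneg).
  apply (HasSumR_Minkowski (fun i => sqrt (nweight i) * Cabs (ndiff u i))
                           (fun i => sqrt (nweight i) * Cabs (ndiff v i))).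
  - intros i. split; [apply ndens_nonneg|]. unfold ndens.
    pose proof (Hw i). pose proof (Cabs_pos (ndiff w i)). pose proof (nweight_nonneg i).
    replace ((sqrt (nweight i) * Cabs (ndiff u i) + sqrt (nweight i) * Cabs (ndiff v i)) *
             (sqrt (nweight i) * Cabs (ndiff u i) + sqrt (nweight i) * Cabs (ndiff v i)))
      with (nweight i *
            ((Cabs (ndiff u i) + Cabs (ndiff v i)) * (Cabs (ndiff u i) + Cabs (ndiff v i))))
      by (rewrite <- (Hsq i) at 1; ring).
    apply Rmult_le_compat_l; auto. apply Rmult_le_compat; auto.
  - eapply HasSumR_ext; [|apply Hu]. intros i; unfold ndens. rewrite <- (Hsq i) at 1. ring.
  - eapply HasSumR_ext; [|apply Hv]. intros i; unfold ndens. rewrite <- (Hsq i) at 1. ring.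
Qed.

Lemma ndens_plus u v su sv : HasSumR (ndens u) su -> HasSumR (ndens v) sv ->
  exists s, HasSumR (ndens (fplus u v)) s /\ sqrt s <= sqrt su + sqrt sv.
Proof.
  apply ndens_triangle. intros i.
  replace (ndiff (fplus u v) i) with (Cplus (ndiff u i) (ndiff v i)) by
    (destruct i as [p|[x|x]]; simpl; unfold fplus; auto; unfold Cminus, Cplus, Copp; Cring).
  apply Cabs_triang.
Qed.

Lemma ndens_minus u v su sv : HasSumR (ndens u) su -> HasSumR (ndens v) sv ->
  exists s, HasSumR (ndens (fminus u v)) s /\ sqrt s <= sqrt su + sqrt sv.
Proof.
  apply ndens_triangle. intros i.
  replace (ndiff (fminus u v) i) with (Cminus (ndiff u i) (ndiff v i)) by
    (destruct i as [p|[x|x]]; simpl; unfold fminus; auto; unfold Cminus, Cplus, Copp; Cring).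
  apply Cabs_minus_le.
Qed.

Lemma ndens_scal a u su : HasSumR (ndens u) su -> HasSumR (ndens (fscal a u)) (Cabs a * Cabs a * su).
Proof.
  intros H. eapply HasSumR_ext; [|apply (HasSumR_scal (Cabs a * Cabs a) _ _ H)].
  intros i; unfold ndens.
  replace (ndiff (fscal a u) i) with (Cmult a (ndiff u i)) by
    (destruct i as [p|[x|x]]; simpl; unfold fscal; auto; unfold Cminus, Cplus, Copp, Cmult; Cring).
  rewrite Cabs_mult. ring.
Qed.

Lemma HasSumR_ndens_zero : HasSumR (ndens zero_fun) 0.
Proof.
  eapply HasSumR_ext; [|apply HasSumR_zero]. intros i. unfold ndens, zero_fun.
  replace (Cabs (ndiff (fun _ : V => C0) i)) with 0; [ring|].
  rewrite <- Cabs_C0. destruct i as [p|[y|y]]; simpl; auto. f_equal; unfold C0; Cring.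
Qed.

Lemma Cabs_delta_diff_sq (x y z : V) :
  Cabs (Cminus (delta x y) (delta x z)) * Cabs (Cminus (delta x y) (delta x z)) <=
  (if classic_eq_dec y x then 1 else 0) + (if classic_eq_dec z x then 1 else 0).
Proof.
  rewrite Cabs_sq. unfold delta.
  destruct (classic_eq_dec x y), (classic_eq_dec x z), (classic_eq_dec y x), (classic_eq_dec z x);
    try congruence; unfold Cminus, Cplus, Copp, RC, C0; simpl; lra.
Qed.

Lemma DQN_delta (x : V) : DQN m b c (delta x).
Proof.
  assert (Hsupp : forall f : V -> R, (forall y, y <> x -> f y = 0) -> RSummable f).
  { intros f Hf. apply (HasSumR_summable _ (Rsum_list f (x :: nil))). apply HasSumR_finite.
    - constructor; [simpl; tauto | constructor].
    - intros y Hy. apply Hf. intros ->. apply Hy; left; auto. }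
  apply DQN_iff_energies. split; [|split].
  - set (row := fun p : V * V => if classic_eq_dec (fst p) x then b x (snd p) else 0).
    assert (K : HasSumR (fun p => row p + row (snd p, fst p)) (deg x + deg x)).
    { apply HasSumR_plus; [apply HasSumR_row, HasSumR_deg|].
      apply (HasSumR_swap row). apply HasSumR_row, HasSumR_deg. }
    eapply RSummable_le; [|apply (HasSumR_summable _ _ K)].
    intros [y z]. unfold energy_b, row; simpl.
    pose proof (Cabs_delta_diff_sq x y z) as Hd. pose proof (b_nonneg y z).
    pose proof (Cabs_pos (Cminus (delta x y) (delta x z))).
    rewrite !Rabs_pos_eq.
    + rewrite Rmult_assoc. eapply Rle_trans; [apply Rmult_le_compat_l; [lra | apply Hd]|].
      destruct (classic_eq_dec y x) as [->|], (classic_eq_dec z x) as [->|];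
        try rewrite (b_sym y x); lra.
    + destruct (classic_eq_dec y x), (classic_eq_dec z x); pose proof (b_nonneg x y);
        pose proof (b_nonneg x z); lra.
    + rewrite Rmult_assoc. apply Rmult_le_pos; nra.
  - apply Hsupp. intros y ne. unfold energy_c, delta.
    destruct (classic_eq_dec x y); [congruence|]. rewrite Cabs_C0; ring.
  - apply Hsupp. intros y ne. unfold energy_m, delta.
    destruct (classic_eq_dec x y); [congruence|]. rewrite Cabs_C0; ring.
Qed.

Lemma HasSumR_ndens_Cc phi : Cc phi -> exists s, HasSumR (ndens phi) s.
Proof.
  revert phi. apply (Cc_delta_ind (fun phi => exists s, HasSumR (ndens phi) s)).
  - exists 0; apply HasSumR_ndens_zero.
  - intros a x w [s Hs].
    destruct (RSummable_HasSumR _ (proj1 (DQN_iff_ndens (delta x)) (DQN_delta x))) as [t Ht].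
    destruct (ndens_plus _ _ _ _ (ndens_scal a _ _ Ht) Hs) as [r [Hr _]]. exists r; auto.
Qed.

Lemma DQN_Cc phi : Cc phi -> DQN m b c phi.
Proof.
  intros H. apply DQN_iff_ndens. destruct (HasSumR_ndens_Cc phi H) as [s Hs].
  eapply HasSumR_summable; eauto.
Qed.

Lemma formnorm_QN_zero : nN zero_fun = 0.
Proof. rewrite (formnorm_QN _ _ HasSumR_ndens_zero). apply sqrt_0. Qed.

Lemma formnorm_QN_minus u w : DQN m b c u -> DQN m b c w ->
  DQN m b c (fminus u w) /\
  nN (fminus u w) <= nN u + nN w.
Proof.
  rewrite !DQN_iff_ndens. intros Hu Hw.
  destruct (RSummable_HasSumR _ Hu) as [su Hsu]. destruct (RSummable_HasSumR _ Hw) as [sw Hsw].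
  destruct (ndens_minus _ _ _ _ Hsu Hsw) as [s [Hs Hle]].
  split; [eapply HasSumR_summable; eauto|].
  rewrite (formnorm_QN _ _ Hs), (formnorm_QN _ _ Hsu), (formnorm_QN _ _ Hsw). auto.
Qed.

Lemma Cabs_le_formnorm_QN w x : DQN m b c w -> Cabs (w x) <= nN w / sqrt (m x).
Proof.
  rewrite DQN_iff_ndens. intros H. destruct (RSummable_HasSumR _ H) as [s Hs].
  rewrite (formnorm_QN _ _ Hs). apply Cabs_le_div_sqrt; auto using sqrt_pos.
  rewrite sqrt_sqrt by (apply (HasSumR_ge0 _ _ (ndens_nonneg w) Hs)).
  pose proof (HasSumR_term_le _ _ (inr (inr x)) (ndens_nonneg w) Hs) as Hx.
  unfold ndens in Hx; simpl in Hx. lra.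
Qed.

Lemma ndens_Un_cv (wk : nat -> V -> Cx) w :
  (forall x, Un_cv (fun k => Cabs (Cminus (wk k x) (w x))) 0) ->
  forall i, Un_cv (fun k => ndens (wk k) i) (ndens w i).
Proof.
  intros H i.
  assert (Hsq : forall (u : nat -> R) L e, (forall k, Rabs (u k - L) <= e k) -> Un_cv e 0 ->
                Un_cv u L).
  { intros u L e Hb He eps Heps. destruct (He eps Heps) as [N HN]. exists N. intros n Hn.
    specialize (HN n Hn). unfold Rdist in *. rewrite Rminus_0_r in HN.
    pose proof (Hb n). pose proof (Rle_abs (e n)). lra. }
  assert (HA : Un_cv (fun k => Cabs (ndiff (wk k) i)) (Cabs (ndiff w i))).
  { destruct i as [[y z]|[x|x]]; simpl.
    - apply (Hsq _ _ (fun k => Cabs (Cminus (wk k y) (w y)) + Cabs (Cminus (wk k z) (w z)))).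
      + intros k. eapply Rle_trans; [apply Cabs_triang_inv|].
        replace (Cminus (Cminus (wk k y) (wk k z)) (Cminus (w y) (w z))) with
          (Cminus (Cminus (wk k y) (w y)) (Cminus (wk k z) (w z)))
          by (unfold Cminus, Cplus, Copp; Cring).
        apply Cabs_minus_le.
      + replace 0 with (0 + 0) by ring. apply CV_plus; auto.
    - apply (Hsq _ _ (fun k => Cabs (Cminus (wk k x) (w x)))); auto.
      intros k; apply Cabs_triang_inv.
    - apply (Hsq _ _ (fun k => Cabs (Cminus (wk k x) (w x)))); auto.
      intros k; apply Cabs_triang_inv. }
  unfold ndens. apply CV_mult; [|apply CV_mult; auto].
  intros eps He. exists O. intros. unfold Rdist. rewrite Rminus_diag_eq, Rabs_R0; auto.
Qed.

(** * The form inner product on the domain of Q *)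

Context (D : (V -> Cx) -> Prop) (Q : (V -> Cx) -> (V -> Cx) -> Cx).

Local Notation P := (ipQ m Q).
Local Notation nQ := (formnorm m Q).

(* [sym_form m D Q] and condition (C): (C0) is [Q_nonneg] and [Q_closed], (C1) is [D_Cc]
   and (C2) is [Q_Ltilde]. *)
Hypothesis D_l2 : forall u, D u -> l2 m u.
Hypothesis D_zero : D zero_fun.
Hypothesis D_plus : forall u v, D u -> D v -> D (fplus u v).
Hypothesis D_scal : forall a u, D u -> D (fscal a u).
Hypothesis Q_plus : forall u v w, D u -> D v -> D w -> Q (fplus u v) w = Cplus (Q u w) (Q v w).
Hypothesis Q_scal : forall a u v, D u -> D v -> Q (fscal a u) v = Cmult a (Q u v).
Hypothesis Q_herm : forall u v, D u -> D v -> Q v u = Cconj (Q u v).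
Hypothesis Q_nonneg : forall u, D u -> 0 <= Re (Q u u).
Hypothesis Q_closed : forall phi, (forall n, D (phi n)) -> norm_Cauchy nQ phi ->
  exists u, D u /\ norm_cv nQ phi u.
Hypothesis D_Cc : forall v, Cc v -> D v.
Hypothesis Q_Ltilde : forall u v, D u -> Cc v ->
  HasSumC (fun x => Cmult (Cmult (u x) (Cconj (Ltilde m b c v x))) (RC (m x))) (Q u v).

Lemma D_minus u v : D u -> D v -> D (fminus u v).
Proof. intros. rewrite fminus_fplus_fscal. auto. Qed.

Lemma HasSumC_ip u v : l2 m u -> l2 m v ->
  HasSumC (fun x => Cmult (Cmult (u x) (Cconj (v x))) (RC (m x))) (ip m u v).
Proof.
  intros Hu Hv. apply Csummable_HasSumC.
  unfold l2 in Hu, Hv. rewrite Csummable_RC in Hu, Hv.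
  apply (Csummable_le _ (fun x => energy_m u x + energy_m v x)); [|apply RSummable_plus; auto].
  intros x. rewrite !Cabs_mult, Cabs_conj, Cabs_RC. unfold energy_m.
  pose proof (m_pos x). rewrite Rabs_pos_eq by lra.
  pose proof (Cabs_pos (u x)); pose proof (Cabs_pos (v x)).
  pose proof (Rle_0_sqr (Cabs (u x) - Cabs (v x))). unfold Rsqr in *. nra.
Qed.

Lemma ip_plus u v w : l2 m u -> l2 m v -> l2 m w ->
  ip m (fplus u v) w = Cplus (ip m u w) (ip m v w).
Proof.
  intros Hu Hv Hw. unfold ip at 1. apply sumC_eq.
  eapply HasSumC_ext; [|apply (HasSumC_plus _ _ _ _ (HasSumC_ip u w Hu Hw) (HasSumC_ip v w Hv Hw))].
  intros x; unfold fplus, Cplus, Cmult, Cconj; Cring.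
Qed.

Lemma ip_scal a u w : l2 m u -> l2 m w -> ip m (fscal a u) w = Cmult a (ip m u w).
Proof.
  intros Hu Hw. unfold ip at 1. apply sumC_eq.
  eapply HasSumC_ext; [|apply (HasSumC_scal a _ _ (HasSumC_ip u w Hu Hw))].
  intros x; unfold fscal, Cmult, Cconj; Cring.
Qed.

Lemma ip_herm u v : l2 m u -> l2 m v -> ip m v u = Cconj (ip m u v).
Proof.
  intros Hu Hv. unfold ip at 1. apply sumC_eq.
  eapply HasSumC_ext; [|apply (HasSumC_conj _ _ (HasSumC_ip u v Hu Hv))].
  intros x; unfold Cmult, Cconj, RC; Cring.
Qed.

Lemma energy_m_le_Re_ip u x : l2 m u -> energy_m u x <= Re (ip m u u).
Proof.
  intros Hu. unfold l2 in Hu. rewrite Csummable_RC in Hu.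
  destruct (RSummable_HasSumR _ Hu) as [s Hs]. rewrite (Re_ip u s Hs).
  apply (HasSumR_term_le _ s x (energy_m_nonneg u) Hs).
Qed.

Lemma Re_ip_nonneg u : l2 m u -> 0 <= Re (ip m u u).
Proof.
  intros Hu. unfold l2 in Hu. rewrite Csummable_RC in Hu.
  destruct (RSummable_HasSumR _ Hu) as [s Hs]. rewrite (Re_ip u s Hs).
  apply (HasSumR_ge0 _ s (energy_m_nonneg u) Hs).
Qed.

Lemma ipQ_plus_l u v w : D u -> D v -> D w -> P (fplus u v) w = Cplus (P u w) (P v w).
Proof. intros. unfold ipQ. rewrite Q_plus, ip_plus; auto. unfold Cplus; Cring. Qed.

Lemma ipQ_scal_l a u w : D u -> D w -> P (fscal a u) w = Cmult a (P u w).
Proof. intros. unfold ipQ. rewrite Q_scal, ip_scal; auto. unfold Cplus, Cmult; Cring. Qed.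

Lemma ipQ_herm u v : D u -> D v -> P v u = Cconj (P u v).
Proof. intros. unfold ipQ. rewrite (Q_herm u v), (ip_herm u v); auto. unfold Cplus, Cconj; Cring. Qed.

Lemma ipQ_plus_r u v w : D u -> D v -> D w -> P u (fplus v w) = Cplus (P u v) (P u w).
Proof.
  intros. rewrite ipQ_herm, ipQ_plus_l, (ipQ_herm u v), (ipQ_herm u w) by auto.
  unfold Cconj, Cplus; Cring.
Qed.

Lemma ipQ_scal_r a u w : D u -> D w -> P u (fscal a w) = Cmult (Cconj a) (P u w).
Proof.
  intros. rewrite ipQ_herm, ipQ_scal_l, (ipQ_herm u w) by auto. unfold Cconj, Cmult; Cring.
Qed.

Lemma Re_ipQ_nonneg u : D u -> 0 <= Re (P u u).
Proof.
  intros Hu. unfold ipQ, Re, Cplus; simpl.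
  pose proof (Q_nonneg u Hu). pose proof (Re_ip_nonneg u (D_l2 u Hu)). unfold Re in *; lra.
Qed.

Lemma energy_m_le_Re_ipQ u x : D u -> energy_m u x <= Re (P u u).
Proof.
  intros Hu. unfold ipQ, Re, Cplus; simpl.
  pose proof (Q_nonneg u Hu). pose proof (energy_m_le_Re_ip u x (D_l2 u Hu)). unfold Re in *; lra.
Qed.

Lemma ipQ_self_real u : D u -> snd (P u u) = 0.
Proof.
  intros Hu. pose proof (ipQ_herm u u Hu Hu) as H.
  destruct (P u u) as [p1 p2]. unfold Cconj in H; simpl in H. inversion H. simpl. lra.
Qed.

Lemma Re_ipQ_plus u v : D u -> D v ->
  Re (P (fplus u v) (fplus u v)) = Re (P u u) + Re (P v v) + 2 * Re (P u v).
Proof.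
  intros. rewrite ipQ_plus_l, !ipQ_plus_r, (ipQ_herm u v) by auto.
  unfold Re, Cplus, Cconj; simpl. ring.
Qed.

Lemma Re_ipQ_minus_scal a u v : D u -> D v ->
  Re (P (fminus u (fscal a v)) (fminus u (fscal a v))) =
  Re (P u u) - 2 * Re (Cmult (Cconj a) (P u v)) + Cabs a * Cabs a * Re (P v v).
Proof.
  intros Hu Hv. rewrite fminus_fplus_fscal, Re_ipQ_plus by auto.
  repeat (first [rewrite ipQ_scal_l by auto | rewrite ipQ_scal_r by auto]).
  pose proof (ipQ_self_real v Hv) as Hr. rewrite Cabs_sq.
  destruct (P v v) as [p1 p2]. simpl in Hr. subst p2.
  unfold Re, Cmult, Cconj, RC, fscal; simpl. ring.
Qed.

Lemma Re_ipQ_minus u v : D u -> D v ->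
  Re (P (fminus u v) (fminus u v)) = Re (P u u) + Re (P v v) - 2 * Re (P u v).
Proof.
  intros Hu Hv.
  replace (fminus u v) with (fminus u (fscal (RC 1) v)) by fun_ring.
  rewrite Re_ipQ_minus_scal, Cabs_RC, Rabs_R1 by auto. unfold Re, Cmult, Cconj, RC; simpl. ring.
Qed.

Lemma formnorm_eq w : nQ w = sqrt (Re (P w w)).
Proof. reflexivity. Qed.

Lemma formnorm_sq w : D w -> nQ w * nQ w = Re (P w w).
Proof. intros. apply sqrt_sqrt, Re_ipQ_nonneg; auto. Qed.

Lemma formnorm_nonneg w : 0 <= nQ w.
Proof. apply sqrt_pos. Qed.

Lemma Re_ipQ_Cauchy_Schwarz u v : D u -> D v -> Rabs (Re (P u v)) <= nQ u * nQ v.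
Proof.
  intros Hu Hv.
  assert (K : Re (P u v) * Re (P u v) <= Re (P u u) * Re (P v v)).
  { apply discriminant_le; try apply Re_ipQ_nonneg; auto.
    intros t. pose proof (Re_ipQ_nonneg _ (D_minus u (fscal (RC t) v) Hu (D_scal _ _ Hv))) as H.
    rewrite Re_ipQ_minus_scal, Cabs_RC in H by auto.
    replace (Rabs t * Rabs t) with (t * t) in H by (rewrite <- Rabs_mult; rewrite Rabs_pos_eq; nra).
    unfold Re, Cmult, Cconj, RC in *; simpl in *. lra. }
  rewrite !formnorm_eq, <- sqrt_mult by (apply Re_ipQ_nonneg; auto).
  rewrite <- sqrt_Rsqr_abs. apply sqrt_le_1_alt. unfold Rsqr. auto.
Qed.

Lemma formnorm_plus u v : D u -> D v -> nQ (fplus u v) <= nQ u + nQ v.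
Proof.
  intros Hu Hv. pose proof (formnorm_nonneg u); pose proof (formnorm_nonneg v).
  rewrite (formnorm_eq (fplus u v)), <- (sqrt_square (nQ u + nQ v)) by lra.
  apply sqrt_le_1_alt. rewrite Re_ipQ_plus by auto.
  pose proof (Re_ipQ_Cauchy_Schwarz u v Hu Hv). pose proof (Rle_abs (Re (P u v))).
  rewrite <- (formnorm_sq u), <- (formnorm_sq v) by auto. nra.
Qed.

Lemma formnorm_scal a u : D u -> nQ (fscal a u) = Cabs a * nQ u.
Proof.
  intros Hu. rewrite !formnorm_eq, ipQ_scal_l, ipQ_scal_r by auto.
  replace (Re (Cmult a (Cmult (Cconj a) (P u u)))) with (Cabs a * Cabs a * Re (P u u))
    by (pose proof (ipQ_self_real u Hu) as Hr; rewrite Cabs_sq; destruct (P u u) as [p1 p2];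
        simpl in Hr; subst p2; unfold Re, Cmult, Cconj; simpl; ring).
  rewrite sqrt_mult by (try apply Re_ipQ_nonneg; auto; pose proof (Cabs_pos a); nra).
  rewrite sqrt_square; auto. apply Cabs_pos.
Qed.

Lemma Cabs_ipQ_le u v : D u -> D v -> Cabs (P u v) <= nQ u * nQ v.
Proof.
  intros Hu Hv. set (z := P u v).
  pose proof (Re_ipQ_Cauchy_Schwarz u (fscal z v) Hu (D_scal _ _ Hv)) as H.
  rewrite ipQ_scal_r, formnorm_scal in H by auto. fold z in H.
  replace (Re (Cmult (Cconj z) z)) with (Cabs z * Cabs z) in H
    by (rewrite Cabs_sq; unfold Re, Cmult, Cconj; simpl; ring).
  rewrite Rabs_pos_eq in H by (pose proof (Cabs_pos z); nra).
  replace (nQ u * (Cabs z * nQ v)) with (Cabs z * (nQ u * nQ v)) in H by ring.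
  destruct (Cabs_pos z) as [Hz|Hz].
  - apply (Rmult_le_reg_l (Cabs z)); auto.
  - rewrite <- Hz. pose proof (formnorm_nonneg u). pose proof (formnorm_nonneg v). nra.
Qed.

Lemma formnorm_minus_sym u v : D u -> D v -> nQ (fminus u v) = nQ (fminus v u).
Proof.
  intros Hu Hv. replace (fminus u v) with (fscal (RC (-1)) (fminus v u)).
  - rewrite formnorm_scal by (apply D_minus; auto). rewrite Cabs_RC, (Rabs_left (-1)) by lra. ring.
  - fun_ring.
Qed.

Lemma formnorm_triangle u v w : D u -> D v -> D w ->
  nQ (fminus u w) <= nQ (fminus u v) + nQ (fminus v w).
Proof.
  intros Hu Hv Hw.
  replace (fminus u w) with (fplus (fminus u v) (fminus v w)) by fun_ring.
  apply formnorm_plus; apply D_minus; auto.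
Qed.

Lemma formnorm_parallelogram u v : D u -> D v ->
  nQ (fminus u v) * nQ (fminus u v) + nQ (fplus u v) * nQ (fplus u v) =
  2 * (nQ u * nQ u) + 2 * (nQ v * nQ v).
Proof.
  intros Hu Hv. rewrite !formnorm_sq by (auto using D_minus).
  rewrite Re_ipQ_minus, Re_ipQ_plus by auto. ring.
Qed.

Lemma Cabs_le_formnorm u x : D u -> Cabs (u x) <= nQ u / sqrt (m x).
Proof.
  intros Hu. apply Cabs_le_div_sqrt; auto using formnorm_nonneg.
  rewrite formnorm_sq by auto. apply energy_m_le_Re_ipQ; auto.
Qed.

Lemma ipQ_eq0_of_minimizer h w : D h -> D w ->
  (forall a, nQ h <= nQ (fminus h (fscal a w))) -> P h w = C0.
Proof.
  intros Hh Hw Hmin. set (z := P h w).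
  assert (Hz : Cabs z * Cabs z * (Cabs z * Cabs z) <= 0 * (Cabs z * Cabs z * Re (P w w))).
  { apply discriminant_le; [lra | pose proof (Re_ipQ_nonneg w Hw); nra |].
    intros t. pose proof (Hmin (Cmult (RC t) z)) as H.
    pose proof (formnorm_nonneg h).
    assert (Hsq : nQ h * nQ h <= nQ (fminus h (fscal (Cmult (RC t) z) w)) *
                                 nQ (fminus h (fscal (Cmult (RC t) z) w))) by nra.
    rewrite !formnorm_sq in Hsq by (auto using D_minus).
    rewrite Re_ipQ_minus_scal in Hsq by auto. fold z in Hsq.
    rewrite Cabs_mult, Cabs_RC in Hsq.
    replace (Re (Cmult (Cconj (Cmult (RC t) z)) z)) with (t * (Cabs z * Cabs z)) in Hsq
      by (rewrite Cabs_sq; unfold Re, Cmult, Cconj, RC; simpl; ring).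
    replace (Rabs t * Cabs z * (Rabs t * Cabs z)) with (t * t * (Cabs z * Cabs z)) in Hsq
      by (rewrite <- (Rabs_pos_eq (t * t)) by nra; rewrite Rabs_mult; ring).
    nra. }
  apply Cabs_eq0. rewrite Rmult_0_l in Hz.
  destruct (Cabs_pos z) as [Hp|Hp]; [exfalso | auto].
  assert (0 < Cabs z * Cabs z) by (apply Rmult_lt_0_compat; auto). nra.
Qed.

(** * Consequences of condition (C) *)

(* Testing (C2) against [delta x] expresses [sum_y b(x,y) u(y)] through [Q u (delta x)]. *)
Lemma HasSumC_b_Q_delta u x : D u ->
  HasSumC (fun y => Cmult (RC (b x y)) (u y))
    (Cmult (RC (-1)) (Cminus (Q u (delta x)) (Cmult (u x) (RC (deg x + c x))))).
Proof.
  intros Hu.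
  set (pt := fun y => if classic_eq_dec x y then Cmult (u x) (RC (deg x + c x)) else C0).
  assert (Hpt : HasSumC pt (Cmult (u x) (RC (deg x + c x)))).
  { apply (HasSumC_finite _ (x :: nil)).
    - constructor; [simpl; tauto | constructor].
    - intros y Hy; unfold pt; destruct (classic_eq_dec x y); [subst; exfalso; apply Hy; left|]; auto.
    - simpl; unfold pt; destruct (classic_eq_dec x x); [|congruence]. unfold C0; Cring. }
  pose proof (HasSumC_minus _ _ _ _ (Q_Ltilde u (delta x) Hu (Cc_delta x)) Hpt) as K.
  apply (HasSumC_scal (RC (-1))) in K.
  eapply HasSumC_ext; [|apply K]. intros y. simpl.
  unfold pt. destruct (classic_eq_dec x y) as [<-|ne].
  - rewrite Ltilde_delta_eq, b_diag. pose proof (m_pos x).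
    unfold RC, Cconj; apply Cx_eq; simpl; field; lra.
  - rewrite Ltilde_delta_neq by auto.
    rewrite (b_sym x y). pose proof (m_pos y).
    unfold RC, Cconj, C0; apply Cx_eq; simpl; field; lra.
Qed.

Lemma D_Ftilde u : D u -> Ftilde b u.
Proof. intros Hu x. eapply HasSumC_summable, HasSumC_b_Q_delta; auto. Qed.

Lemma Q_delta u x : D u -> Q u (delta x) = Cmult (RC (m x)) (Ltilde m b c u x).
Proof.
  intros Hu. rewrite (Ltilde_eq u x _ (HasSumC_b_Q_delta u x Hu)).
  unfold RC; Cring.
Qed.

Lemma ip_delta u x : ip m u (delta x) = Cmult (u x) (RC (m x)).
Proof.
  unfold ip. apply sumC_eq. apply (HasSumC_finite _ (x :: nil)).
  - constructor; [simpl; tauto | constructor].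
  - intros y Hy; unfold delta; destruct (classic_eq_dec x y); [subst; exfalso; apply Hy; left; auto|].
    unfold C0; Cring.
  - simpl; unfold delta; destruct (classic_eq_dec x x); [|congruence]. unfold RC, C0; Cring.
Qed.

Lemma ipQ_delta u x : D u ->
  ipQ m Q u (delta x) = Cmult (RC (m x)) (Cplus (Ltilde m b c u x) (u x)).
Proof. intros Hu. unfold ipQ. rewrite Q_delta, ip_delta by auto. unfold RC; Cring. Qed.

Definition Re_dot (w : V -> Cx) (x z : V) : R := fst (w x) * fst (w z) + snd (w x) * snd (w z).

Lemma Re_Q_finite_support w l : Cc w -> NoDup l -> (forall x, ~ In x l -> w x = C0) ->
  Re (Q w w) =
  Rsum_list (fun x => Cabs (w x) * Cabs (w x) * (deg x + c x)) l -
  Rsum_list (fun x => Rsum_list (fun z => b x z * Re_dot w x z) l) l.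
Proof.
  intros Hw Hl Hz.
  assert (H := HasSumC_finite
    (fun x => Cmult (Cmult (w x) (Cconj (Ltilde m b c w x))) (RC (m x))) l _ Hl
    ltac:(intros x Hx; cbv beta; rewrite Hz by auto; unfold C0; Cring) eq_refl).
  rewrite (HasSumC_unique _ _ _ (Q_Ltilde w w (D_Cc w Hw) Hw) H).
  unfold Re. rewrite Csum_fst, <- Rsum_minus. apply Rsum_ext. intros x.
  assert (HSx : HasSumC (fun z => Cmult (RC (b x z)) (w z))
                        (Csum_list (fun z => Cmult (RC (b x z)) (w z)) l)).
  { apply (HasSumC_finite _ l); auto. intros z Hzl. rewrite Hz by auto. unfold C0; Cring. }
  pose proof (Ltilde_eq w x _ HSx) as E. pose proof (m_pos x).
  apply Cmult_RC_inj in E; [|lra]. rewrite E. simpl. rewrite Csum_fst, Csum_snd.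
  rewrite (Rsum_ext (fun z => b x z * Re_dot w x z)
             (fun z => fst (w x) * (b x z * fst (w z)) + snd (w x) * (b x z * snd (w z))))
    by (intros; unfold Re_dot; ring).
  rewrite Rsum_plus, (Rsum_scal (fst (w x))), (Rsum_scal (snd (w x))).
  rewrite (Rsum_ext (fun z => fst (Cmult (RC (b x z)) (w z))) (fun z => b x z * fst (w z)))
    by (intros; unfold RC; simpl; ring).
  rewrite (Rsum_ext (fun z => snd (Cmult (RC (b x z)) (w z))) (fun z => b x z * snd (w z)))
    by (intros; unfold RC; simpl; ring).
  rewrite Cabs_sq. field. lra.
Qed.

(* Expanding [|w x - w z|^2] splits the edge energy into two degree terms and a cross term. *)
Lemma HasSumR_energy_b_finite_support w l : NoDup l -> (forall x, ~ In x l -> w x = C0) ->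
  HasSumR (energy_b w)
    (2 * Rsum_list (fun x => Cabs (w x) * Cabs (w x) * deg x) l -
     2 * Rsum_list (fun x => Rsum_list (fun z => b x z * Re_dot w x z) l) l).
Proof.
  intros Hl Hz.
  assert (Hz' : forall x, ~ In x l -> Cabs (w x) = 0) by (intros; rewrite Hz, Cabs_C0; auto).
  set (diag := fun p : V * V => b (fst p) (snd p) * (Cabs (w (fst p)) * Cabs (w (fst p)))).
  set (cross := fun p : V * V => b (fst p) (snd p) * Re_dot w (fst p) (snd p)).
  assert (Hdiag : HasSumR diag (Rsum_list (fun x => Cabs (w x) * Cabs (w x) * deg x) l)).
  { eapply HasSumR_ext; [|apply (HasSumR_Rsum_list
      (fun x p => if classic_eq_dec (fst p) x then Cabs (w x) * Cabs (w x) * b x (snd p) else 0))].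
    - intros p. cbv beta. rewrite Rsum_list_delta by auto. unfold diag.
      destruct (in_dec classic_eq_dec (fst p) l); [ring|]. rewrite Hz'; auto; ring.
    - intros x _. apply (HasSumR_row x (fun y => Cabs (w x) * Cabs (w x) * b x y)).
      apply HasSumR_scal, HasSumR_deg; auto. }
  assert (Hcross : HasSumR cross
                     (Rsum_list (fun x => Rsum_list (fun z => b x z * Re_dot w x z) l) l)).
  { eapply HasSumR_ext; [|apply (HasSumR_Rsum_list
      (fun x p => if classic_eq_dec (fst p) x then b x (snd p) * Re_dot w x (snd p) else 0))].
    - intros p. cbv beta. rewrite Rsum_list_delta by auto. unfold cross.
      destruct (in_dec classic_eq_dec (fst p) l); [auto|].
      unfold Re_dot. rewrite Hz by auto. unfold C0; simpl; ring.
    - intros x _. apply (HasSumR_row x (fun z => b x z * Re_dot w x z)).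
      apply HasSumR_finite; auto. intros z Hzl. unfold Re_dot. rewrite (Hz z Hzl).
      unfold C0; simpl; ring. }
  pose proof (HasSumR_minus _ _ _ _
    (HasSumR_plus _ _ _ _ Hdiag (HasSumR_swap _ _ Hdiag)) (HasSumR_scal 2 _ _ Hcross)) as K.
  replace (2 * Rsum_list (fun x => Cabs (w x) * Cabs (w x) * deg x) l)
    with (Rsum_list (fun x => Cabs (w x) * Cabs (w x) * deg x) l +
          Rsum_list (fun x => Cabs (w x) * Cabs (w x) * deg x) l) by ring.
  eapply HasSumR_ext; [|apply K]. intros [x z]. unfold diag, cross, energy_b, Re_dot; simpl.
  rewrite (b_sym z x), !Rmult_assoc, !Cabs_sq. unfold Cminus, Cplus, Copp; simpl. ring.
Qed.

Lemma formnorm_Cc w : Cc w -> nQ w = nN w.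
Proof.
  intros Hw. destruct (Cc_NoDup_support w Hw) as [l [Hl Hz]].
  assert (Hc : HasSumR (energy_c w) (Rsum_list (energy_c w) l)).
  { apply HasSumR_finite; auto. intros x Hx. unfold energy_c; rewrite Hz, Cabs_C0; auto; ring. }
  unfold formnorm. f_equal. f_equal.
  rewrite (Re_QN w _ _ (HasSumR_energy_b_finite_support w l Hl Hz) Hc).
  rewrite (Re_Q_finite_support w l Hw Hl Hz).
  replace (Rsum_list (fun x => Cabs (w x) * Cabs (w x) * (deg x + c x)) l) with
    (Rsum_list (fun x => Cabs (w x) * Cabs (w x) * deg x) l + Rsum_list (energy_c w) l)
    by (rewrite <- Rsum_plus; apply Rsum_ext; intros; unfold energy_c; ring).
  field.
Qed.

(** * The orthogonal decomposition *)

Local Hint Resolve D_minus D_Cc Cc_delta Cc_minus Cc_plus Cc_scal : core.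

Lemma Cc_DQD phi : Cc phi -> DQD m b c phi.
Proof.
  intros H. split; [apply DQN_Cc; auto|].
  intros eps He. exists phi. split; auto.
  replace (fminus phi phi) with (@zero_fun V) by fun_ring.
  rewrite formnorm_QN_zero; auto.
Qed.

Lemma ipQ_Cc_eq0_of_harmonic u : D u -> (forall x, Cplus (Ltilde m b c u x) (u x) = C0) ->
  forall phi, Cc phi -> P u phi = C0.
Proof.
  intros Hu HL phi Hphi.
  enough (D phi /\ P u phi = C0) by tauto.
  revert phi Hphi. apply (Cc_delta_ind (fun phi => D phi /\ P u phi = C0)).
  - split; auto. replace (@zero_fun V) with (fscal C0 (@zero_fun V)) by fun_ring.
    rewrite ipQ_scal_r by auto. unfold C0, Cconj, Cmult; Cring.
  - intros a x w [Dw Hw].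
    assert (Hd : D (fscal a (delta x))) by auto.
    split; auto.
    rewrite ipQ_plus_r, ipQ_scal_r, ipQ_delta, HL, Hw by auto.
    unfold C0, RC, Cmult, Cplus, Cconj; Cring.
Qed.

Lemma ipQ_eq0_of_Cc_dense u v : D u -> D v -> (forall phi, Cc phi -> P u phi = C0) ->
  (forall eps, 0 < eps -> exists phi, Cc phi /\ nQ (fminus v phi) < eps) -> P u v = C0.
Proof.
  intros Hu Hv H0 Happ. apply (Cabs_le_eps_eq0 _ (nQ u)); [apply formnorm_nonneg|].
  intros eps He. destruct (Happ eps He) as [phi [Hphi Hn]].
  replace (P u v) with (P u (fminus v phi)).
  - eapply Rle_trans; [apply Cabs_ipQ_le; auto|].
    apply Rmult_le_compat_l; [apply formnorm_nonneg | lra].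
  - replace v with (fplus (fminus v phi) phi) at 2 by fun_ring.
    rewrite ipQ_plus_r, (H0 phi Hphi) by auto. unfold Cplus, C0; Cring.
Qed.

(* A limit of finitely supported functions in the form norm of [Q] lies in [D(Q^(D))]: on [C_c]
   the two form norms agree, and Fatou's lemma controls the Neumann norm of the limit. *)
Lemma HasSumR_ndens_limit_le phi u0 N eps : (forall n, Cc (phi n)) -> pointwise_cv phi u0 ->
  (forall k, (N <= k)%nat -> nQ (fminus (phi k) (phi N)) <= eps) ->
  exists s, HasSumR (ndens (fminus u0 (phi N))) s /\ sqrt s <= eps.
Proof.
  intros Hphi Hcv Hb.
  assert (Heps : 0 <= eps) by (eapply Rle_trans; [apply formnorm_nonneg | apply (Hb N); auto]).
  destruct (Fatou_HasSumR (fun k => ndens (fminus (phi k) (phi N)))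
              (ndens (fminus u0 (phi N))) (eps * eps) N) as [s [Hs Hle]].
  - apply ndens_nonneg; auto.
  - apply ndens_Un_cv. intros x. eapply Un_cv_ext; [|apply (Hcv x)]. intros k.
    unfold fminus. f_equal. unfold Cminus, Cplus, Copp; Cring.
  - intros k Hk l Hl.
    destruct (HasSumR_ndens_Cc
                (fminus (phi k) (phi N))) as [sk Hsk]; auto.
    eapply Rle_trans; [apply (HasSumR_partial_le _ _ (ndens_nonneg _) Hsk l Hl)|].
    pose proof (Hb k Hk) as H. rewrite formnorm_Cc, (formnorm_QN _ _ Hsk) in H
      by (auto; apply Cc_minus; auto).
    pose proof (HasSumR_ge0 _ _ (ndens_nonneg _) Hsk).
    rewrite <- (sqrt_sqrt sk) by auto. pose proof (sqrt_pos sk). nra.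
  - exists s. split; auto. rewrite <- (sqrt_square eps) by auto. apply sqrt_le_1_alt; auto.
Qed.

Lemma DQD_of_Cc_Cauchy phi u0 : (forall n, Cc (phi n)) -> norm_Cauchy nQ phi ->
  pointwise_cv phi u0 -> DQD m b c u0.
Proof.
  intros Hphi Hcau Hcv.
  assert (Hsmall : forall eps, 0 < eps -> exists N s,
            HasSumR (ndens (fminus u0 (phi N))) s /\ sqrt s <= eps).
  { intros eps He. destruct (Hcau eps He) as [N HN]. exists N.
    apply HasSumR_ndens_limit_le; auto. intros k Hk. left; apply HN; auto. }
  split.
  - destruct (Hsmall 1) as [N [s [Hs _]]]; [lra|].
    destruct (HasSumR_ndens_Cc (phi N))
      as [t Ht]; auto.
    destruct (ndens_plus _ _ _ _ Hs Ht) as [r [Hr _]].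
    replace (fplus (fminus u0 (phi N)) (phi N)) with u0 in Hr by fun_ring.
    apply DQN_iff_ndens; auto. eapply HasSumR_summable; eauto.
  - intros eps He. destruct (Hsmall (eps / 2)) as [N [s [Hs Hle]]]; [lra|].
    exists (phi N). split; auto. rewrite (formnorm_QN _ _ Hs). lra.
Qed.

Lemma Cc_Cauchy_limit phi : (forall n, Cc (phi n)) -> norm_Cauchy nQ phi ->
  exists u0, D u0 /\ DQD m b c u0 /\ norm_cv nQ phi u0.
Proof.
  intros Hphi Hcau. destruct (Q_closed phi) as [u0 [Du0 Hcv]]; auto.
  exists u0. split; [|split]; auto.
  apply (DQD_of_Cc_Cauchy phi); auto.
  apply (pointwise_cv_of_bound m phi u0 (fun n => nQ (fminus (phi n) u0))); auto.
  intros n x. apply (Cabs_le_formnorm (fminus (phi n) u0)); auto.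
Qed.

Lemma DQD_D_approx v : DQD m b c v ->
  D v /\ forall eps, 0 < eps -> exists phi, Cc phi /\ nQ (fminus v phi) < eps.
Proof.
  intros [HvN Happ]. destruct (approx_sequence Cc (fun phi => nN (fminus v phi)) Happ) as [phi Hphi].
  assert (Hcc : forall n, Cc (phi n)) by apply Hphi.
  assert (HN : forall n, DQN m b c (fminus v (phi n)))
    by (intros n; apply formnorm_QN_minus; auto using DQN_Cc).
  assert (Hcau : norm_Cauchy nQ phi).
  { intros eps He. destruct (inv_INR_S_small (eps / 2)) as [K HK]; [lra|].
    exists K. intros n k Hn Hk.
    rewrite formnorm_Cc by auto.
    replace (fminus (phi n) (phi k)) with (fminus (fminus v (phi k)) (fminus v (phi n)))
      by fun_ring.
    destruct (formnorm_QN_minus _ _ (HN k) (HN n)) as [_ Hle].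
    pose proof (proj2 (Hphi n)); pose proof (proj2 (Hphi k)).
    pose proof (HK n Hn); pose proof (HK k Hk).
    lra. }
  destruct (Cc_Cauchy_limit phi Hcc Hcau) as [u0 [Du0 [_ Hcv]]].
  assert (Hpw : pointwise_cv phi u0).
  { apply (pointwise_cv_of_bound m phi u0 (fun n => nQ (fminus (phi n) u0))); auto.
    intros n x. apply (Cabs_le_formnorm (fminus (phi n) u0)); auto. }
  assert (Hpv : pointwise_cv phi v).
  { apply (pointwise_cv_of_bound m phi v (fun n => / (INR n + 1))); [auto| |apply inv_INR_S_small].
    intros n x. rewrite Cabs_minus_sym.
    eapply Rle_trans; [apply (Cabs_le_formnorm_QN _ x (HN n))|].
    unfold Rdiv. apply Rmult_le_compat_r; [left; apply Rinv_0_lt_compat, sqrt_lt_R0; auto|].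
    left; apply Hphi. }
  rewrite (pointwise_cv_unique phi v u0 Hpv Hpw). split; auto.
  intros eps He. destruct (Hcv eps He) as [K HK]. exists (phi K). split; auto.
  rewrite formnorm_minus_sym by auto. apply HK; auto.
Qed.

Lemma ipQ_DQD_eq0_of_harmonic u v : D u -> (forall x, Cplus (Ltilde m b c u x) (u x) = C0) ->
  DQD m b c v -> P u v = C0.
Proof.
  intros Hu HL Hv. destruct (DQD_D_approx v Hv) as [Dv Happ].
  apply ipQ_eq0_of_Cc_dense; auto. apply ipQ_Cc_eq0_of_harmonic; auto.
Qed.

Lemma harmonic_of_ipQ_DQD_eq0 u : D u -> (forall v, DQD m b c v -> P u v = C0) ->
  forall x, Cplus (Ltilde m b c u x) (u x) = C0.
Proof.
  intros Hu H x. pose proof (H (delta x) (Cc_DQD _ (Cc_delta x))) as Hx.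
  rewrite ipQ_delta in Hx by auto.
  apply Cmult_RC_inj in Hx; [|pose proof (m_pos x); lra]. rewrite Hx. unfold C0, RC; Cring.
Qed.

Lemma ipQ_DQD_HQ_eq0 v h : DQD m b c v -> HQ m b c D h -> P v h = C0.
Proof.
  intros Hv [Dh Hharm]. destruct (DQD_D_approx v Hv) as [Dv _].
  rewrite ipQ_herm, (ipQ_DQD_eq0_of_harmonic h v) by auto. unfold C0, Cconj; Cring.
Qed.

(* Parallelogram law for [u - phi n] and [u - phi k]: their mean is [u - psi] with [psi]
   in [C_c], so its norm is at least [d]. *)
Lemma minimizing_sequence_Cauchy u d phi : D u -> (forall n, Cc (phi n)) -> 0 <= d ->
  (forall psi, Cc psi -> d <= nQ (fminus u psi)) ->
  (forall n, nQ (fminus u (phi n)) < d + / (INR n + 1)) -> norm_Cauchy nQ phi.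
Proof.
  intros Hu Hcc Hd0 Hd Hphi.
  assert (Hest : forall n k, nQ (fminus (phi n) (phi k)) * nQ (fminus (phi n) (phi k)) <=
                             (4 * d + 2) * (/ (INR n + 1) + / (INR k + 1))).
  { intros n k. pose proof (Hphi n). pose proof (Hphi k).
    set (a := fminus u (phi k)) in *. set (a' := fminus u (phi n)) in *.
    set (psi := fscal (RC (/ 2)) (fplus (phi n) (phi k))).
    pose proof (formnorm_parallelogram a a' ltac:(unfold a; auto) ltac:(unfold a'; auto)) as HP.
    replace (fminus a a') with (fminus (phi n) (phi k)) in HP by fun_ring.
    replace (fplus a a') with (fscal (RC 2) (fminus u psi)) in HP
      by (apply functional_extensionality; intros x;
          unfold a, a', psi, fplus, fminus, fscal, Cminus, Cplus, Copp, Cmult, RC;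
          apply Cx_eq; simpl; field).
    rewrite formnorm_scal, Cabs_RC, Rabs_pos_eq in HP by (unfold psi; auto; lra).
    pose proof (Hd psi ltac:(unfold psi; auto)).
    pose proof (formnorm_nonneg a). pose proof (formnorm_nonneg a').
    pose proof (inv_INR_S_pos n). pose proof (inv_INR_S_pos k).
    pose proof (inv_INR_S_le_1 n). pose proof (inv_INR_S_le_1 k).
    set (en := / (INR n + 1)) in *. set (ek := / (INR k + 1)) in *.
    assert (nQ a' * nQ a' <= (d + en) * (d + en)) by nra.
    assert (nQ a * nQ a <= (d + ek) * (d + ek)) by nra.
    assert (4 * (d * d) <= 2 * nQ (fminus u psi) * (2 * nQ (fminus u psi))) by nra.
    nra. }
  intros eps He.
  destruct (inv_INR_S_small (eps * eps / (2 * (4 * d + 2)))) as [K HK];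
    [apply Rdiv_lt_0_compat; nra|].
  exists K. intros n k Hn Hk. pose proof (Hest n k). pose proof (HK n Hn). pose proof (HK k Hk).
  pose proof (formnorm_nonneg (fminus (phi n) (phi k))).
  assert (nQ (fminus (phi n) (phi k)) * nQ (fminus (phi n) (phi k)) < eps * eps).
  { eapply Rle_lt_trans; [eassumption|].
    replace (eps * eps) with ((4 * d + 2) * (eps * eps / (2 * (4 * d + 2)) +
                                             eps * eps / (2 * (4 * d + 2)))) by (field; lra).
    apply Rmult_lt_compat_l; lra. }
  nra.
Qed.

Lemma harmonic_of_minimizer h : D h -> (forall psi, Cc psi -> nQ h <= nQ (fminus h psi)) ->
  forall x, Cplus (Ltilde m b c h x) (h x) = C0.
Proof.
  intros Hh Hmin x.
  assert (H0 : P h (delta x) = C0) by (apply ipQ_eq0_of_minimizer; auto).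
  rewrite ipQ_delta in H0 by auto.
  apply Cmult_RC_inj in H0; [|pose proof (m_pos x); lra]. rewrite H0. unfold C0, RC; Cring.
Qed.

(* [u0] is the best approximation of [u] by the closure of [C_c], and [u - u0] is orthogonal
   to [C_c] because it minimizes the distance to [C_c]. *)
Lemma D_decomposition u : D u ->
  exists u0 h, DQD m b c u0 /\ HQ m b c D h /\ forall x, u x = Cplus (u0 x) (h x).
Proof.
  intros Hu.
  destruct (glb_approx Cc (fun psi => nQ (fminus u psi))) as [d [Hd0 [Hd Happ]]];
    [exists zero_fun; apply Cc_zero | intros; apply formnorm_nonneg|].
  destruct (approx_sequence Cc (fun psi => nQ (fminus u psi) - d)) as [phi Hphi].
  { intros eps He. destruct (Happ eps He) as [psi [? ?]]. exists psi. split; auto; lra. }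
  assert (Hcc : forall n, Cc (phi n)) by apply Hphi.
  assert (Hcau : norm_Cauchy nQ phi)
    by (apply (minimizing_sequence_Cauchy u d); auto; intros n; pose proof (proj2 (Hphi n)); lra).
  destruct (Cc_Cauchy_limit phi Hcc Hcau) as [u0 [Du0 [DQDu0 Hcv]]].
  assert (Hh_le : nQ (fminus u u0) <= d).
  { apply Rnot_lt_le; intro Hlt. set (eps := nQ (fminus u u0) - d).
    destruct (Hcv (eps / 2)) as [N1 HN1]; [unfold eps; lra|].
    destruct (inv_INR_S_small (eps / 2)) as [N2 HN2]; [unfold eps; lra|].
    set (n := max N1 N2).
    specialize (HN1 n (Nat.le_max_l _ _)). specialize (HN2 n (Nat.le_max_r _ _)).
    pose proof (formnorm_triangle u (phi n) u0 Hu (D_Cc _ (Hcc n)) Du0).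
    pose proof (proj2 (Hphi n)). unfold eps in *. lra. }
  assert (Hh_ge : forall psi, Cc psi -> d <= nQ (fminus (fminus u u0) psi)).
  { intros psi Hpsi. apply Rnot_lt_le; intro Hlt. set (eps := d - nQ (fminus (fminus u u0) psi)).
    destruct (Hcv eps) as [N HN]; [unfold eps; lra|]. specialize (HN N (Nat.le_refl _)).
    pose proof (Hd (fplus (phi N) psi) ltac:(auto)) as Hfar.
    pose proof (formnorm_triangle (fminus u psi) u0 (phi N) ltac:(auto) Du0 ltac:(auto)) as Htri.
    replace (fminus (fminus u psi) (phi N)) with (fminus u (fplus (phi N) psi)) in Htri by fun_ring.
    replace (fminus (fminus u psi) u0) with (fminus (fminus u u0) psi) in Htri by fun_ring.
    rewrite (formnorm_minus_sym u0 (phi N)) in Htri by auto.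
    unfold eps in *. lra. }
  exists u0, (fminus u u0). split; [|split]; auto.
  - split; auto. apply harmonic_of_minimizer; auto.
    intros psi Hpsi. pose proof (Hh_ge psi Hpsi). lra.
  - intros x. unfold fminus, Cminus, Cplus, Copp; Cring.
Qed.

End Setting.

Theorem mainTheorem3 (V : Type) (m : V -> R) (b : V -> V -> R) (c : V -> R)
  (D : (V -> Cx) -> Prop) (Q : (V -> Cx) -> (V -> Cx) -> Cx) :
  countable V -> is_measure m -> is_graph b c ->
  sym_form m D Q -> condC m b c D Q ->
  (forall u, D u -> Ftilde b u) /\
  (forall u, D u ->
     ((forall x, Cplus (Ltilde m b c u x) (u x) = C0) <->
      (forall v, DQD m b c v -> ipQ m Q u v = C0))) /\
  (forall v, DQD m b c v -> D v) /\
  (forall v h, DQD m b c v -> HQ m b c D h -> ipQ m Q v h = C0) /\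
  (forall u, D u -> exists u0 h, DQD m b c u0 /\ HQ m b c D h /\
     forall x, u x = Cplus (u0 x) (h x)).
Proof.
  intros _ m_pos (c_nonneg & b_nonneg & b_diag & b_sym & b_summable)
    (D_l2 & D_zero & D_plus & D_scal & Q_plus & Q_scal & Q_herm)
    ((Q_nonneg & Q_closed) & D_Cc & Q_Ltilde).
  split; [|split; [|split; [|split]]].
  - intros u Hu. eapply D_Ftilde with (D := D) (Q := Q); eauto.
  - intros u Hu. split.
    + intros Hharm v Hv. eapply ipQ_DQD_eq0_of_harmonic; eauto.
    + eapply harmonic_of_ipQ_DQD_eq0 with (D := D); eauto.
  - intros v Hv. eapply DQD_D_approx with (Q := Q); eauto.
  - intros v h Hv Hh. eapply ipQ_DQD_HQ_eq0; eauto.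
  - intros u Hu. eapply D_decomposition; eauto.
Qed.
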